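(* Let $N\ge 3$, $0<p<1$, and let $E_N$ be the minimal cost of a Hamiltonian cycle on $N$ points drawn independently and uniformly in $[0,1]$. Then $$\mathbb E[E_N]=\frac{\Gamma(N+1)}{\Gamma(N+p+1)}\left[(N-1)\,\Gamma(p+1)+\frac{\Gamma(N+p-1)}{\Gamma(N-1)}\right],$$ and consequently $\lim_{N\to\infty}N^{p-1}\,\mathbb E[E_N]=\Gamma(p+1)$.
   Context: For points $x_1,\dots,x_N\in[0,1]$ forming the vertices of the complete graph $\mathcal K_N$, the weight of the edge $\{x_i,x_j\}$ is $|x_i-x_j|^p$ and the cost of a Hamiltonian cycle is the sum of its edge weights; $E_N$ is the minimum of this cost over all Hamiltonian cycles. *)

From Stdlib Require Import Reals Lra Lia List Permutation Classical ClassicalEpsilon.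
Open Scope R_scope.

(* x^a for real exponent a, with the convention 0^a = 0 (used for a > 0). *)
Definition rpow (x a : R) : R := if Rle_dec x 0 then 0 else Rpower x a.

(* Euler Gamma function, Gamma(s) = int_0^oo t^(s-1) e^(-t) dt, as an
   improper Riemann integral (all arguments used below are >= 1, so the
   integrand is bounded near 0). *)
Definition gamma_integrand (s t : R) : R :=
  if Rle_dec t 0 then 0 else Rpower t (s - 1) * exp (- t).

Definition is_Gamma (s g : R) : Prop :=
  (forall b, 0 <= b -> exists pr : Riemann_integrable (gamma_integrand s) 0 b, True) /\
  (forall eps, 0 < eps -> exists B, forall b, B <= b ->
     forall pr : Riemann_integrable (gamma_integrand s) 0 b,
       Rabs (RiemannInt pr - g) < eps).

Definition Gamma (s : R) : R :=
  proj1_sig (constructive_indefinite_description (fun g => is_Gamma s g \/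
      ~ (exists g', is_Gamma s g'))
    (match classic (exists g', is_Gamma s g') with
     | or_introl (ex_intro _ g H) => ex_intro _ g (or_introl H)
     | or_intror H => ex_intro _ 0 (or_intror H)
     end)).

Definition pt (xs : list R) (i : nat) : R := nth i xs 0.

Fixpoint path_cost (p : R) (xs : list R) (c : list nat) : R :=
  match c with
  | i :: ((j :: _) as c') => rpow (Rabs (pt xs i - pt xs j)) p + path_cost p xs c'
  | _ => 0
  end.

Definition cycle_cost (p : R) (xs : list R) (c : list nat) : R :=
  match c with
  | nil => 0
  | i :: _ => path_cost p xs (c ++ (i :: nil))
  end.

Definition is_ham_cycle (N : nat) (c : list nat) : Prop := Permutation c (seq 0 N).

Definition is_min_cost (N : nat) (p : R) (xs : list R) (m : R) : Prop :=
  (exists c, is_ham_cycle N c /\ cycle_cost p xs c = m) /\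
  (forall c, is_ham_cycle N c -> m <= cycle_cost p xs c).

Definition E_N (N : nat) (p : R) (xs : list R) : R :=
  proj1_sig (constructive_indefinite_description
    (fun m => is_min_cost N p xs m \/ ~ (exists m', is_min_cost N p xs m'))
    (match classic (exists m', is_min_cost N p xs m') with
     | or_introl (ex_intro _ m H) => ex_intro _ m (or_introl H)
     | or_intror H => ex_intro _ 0 (or_intror H)
     end)).

(* IterInt n F v : the iterated Riemann integral over [0,1]^n of F
   (F applied to the list [x_1; ...; x_n]) exists and equals v.
   The outermost integral is over x_1. *)
Fixpoint IterInt (n : nat) (F : list R -> R) (v : R) : Prop :=
  match n with
  | O => v = F nil
  | S n' => exists g : R -> R,
      (forall t, 0 <= t <= 1 -> IterInt n' (fun ys => F (t :: ys)) (g t)) /\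
      exists pr : Riemann_integrable g 0 1, RiemannInt pr = v
  end.

Definition ExpE (N : nat) (p : R) : R :=
  proj1_sig (constructive_indefinite_description
    (fun v => IterInt N (E_N N p) v \/ ~ (exists v', IterInt N (E_N N p) v'))
    (match classic (exists v', IterInt N (E_N N p) v') with
     | or_introl (ex_intro _ v H) => ex_intro _ v (or_introl H)
     | or_intror H => ex_intro _ 0 (or_intror H)
     end)).

From Stdlib Require Import Reals Lra Lia List Permutation ClassicalEpsilon Factorial.
From Coquelicot Require Import Coquelicot.
Open Scope R_scope.

(* For 0 < p < 1 the optimal tour visits the points in increasing order and closes
   with the edge from the largest back to the smallest point: removing the largest
   point M of a tour and re-inserting it, the concavity of t^p shows that M is best
   attached to the two extreme remaining points.  So E_N = (max - min)^p + sum of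
   the p-th powers of the gaps of the sample.  Functionals of the form
   W(L) = sum phi(gaps) + alpha(min) + beta(max) + gamma(max - min) are stable under
   integrating out one more uniform point, through an explicit linear transform of
   (phi, alpha, beta, gamma); a linear functional Lambda that turns this transform
   into a shift of the sample size then reduces the iterated integral to Beta
   integrals.  The limit follows from Wendel's bounds
   x / (x + p) <= x^p Gamma(x + 1) / Gamma(x + p + 1) <= 1, which come from the
   log-convexity of Gamma. *)

(** * Real powers *)

Lemma rpow_Rpower x a : 0 < x -> rpow x a = Rpower x a.
Proof. intros Hx; unfold rpow; destruct (Rle_dec x 0); [lra | auto]. Qed.

Lemma rpow_nonpos x a : x <= 0 -> rpow x a = 0.
Proof. intros Hx; unfold rpow; destruct (Rle_dec x 0); [auto | lra]. Qed.

Lemma Rpower_gt0 x a : 0 < Rpower x a.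
Proof. apply exp_pos. Qed.

Lemma rpow_ge0 x a : 0 <= rpow x a.
Proof. unfold rpow; destruct (Rle_dec x 0); [lra | left; apply Rpower_gt0]. Qed.

Lemma rpow1 a : rpow 1 a = 1.
Proof. rewrite rpow_Rpower by lra. unfold Rpower; rewrite ln_1, Rmult_0_r; apply exp_0. Qed.

Lemma rpow_le_compat a x y : 0 <= a -> x <= y -> rpow x a <= rpow y a.
Proof.
  intros Ha Hxy; unfold rpow.
  destruct (Rle_dec x 0), (Rle_dec y 0); try lra.
  - left; apply Rpower_gt0.
  - apply Rle_Rpower_l; lra.
Qed.

Lemma Rpower_lt_of_lt_root a eps x :
  0 < a -> 0 < eps -> 0 < x < Rpower eps (/ a) -> Rpower x a < eps.
Proof.
  intros Ha He [Hx0 Hx].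
  replace eps with (Rpower (Rpower eps (/ a)) a).
  - apply Rlt_Rpower_l; lra.
  - rewrite Rpower_mult, Rinv_l, Rpower_1; lra.
Qed.

Lemma Rpower_le_neg_exponent e x y : e < 0 -> 0 < x <= y -> Rpower y e <= Rpower x e.
Proof.
  intros He Hxy.
  assert (Ex := Rpower_Ropp x (- e)). assert (Ey := Rpower_Ropp y (- e)).
  rewrite Ropp_involutive in Ex, Ey. rewrite Ex, Ey.
  apply Rinv_le_contravar; [apply Rpower_gt0 | apply Rle_Rpower_l; lra].
Qed.

Lemma rpow_locally_Rpower x a : 0 < x -> locally x (fun y => Rpower y a = rpow y a).
Proof.
  intros Hx. apply (locally_open (fun y => 0 < y)); [apply open_gt | | exact Hx].
  intros y Hy. rewrite rpow_Rpower; auto.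
Qed.

Lemma rpow_locally_zero x a : x < 0 -> locally x (fun y => 0 = rpow y a).
Proof.
  intros Hx. apply (locally_open (fun y => y < 0)); [apply open_lt | | exact Hx].
  intros y Hy. rewrite rpow_nonpos; auto; lra.
Qed.

Lemma derivable_pt_lim_rpow a x :
  0 < x -> derivable_pt_lim (fun y => rpow y a) x (a * Rpower x (a - 1)).
Proof.
  intros Hx. apply is_derive_Reals.
  apply (is_derive_ext_loc (fun y => Rpower y a)); [apply rpow_locally_Rpower; auto |].
  apply is_derive_Reals, derivable_pt_lim_power; auto.
Qed.

Lemma continuous_rpow a x : 0 < a -> continuity_pt (fun y => rpow y a) x.
Proof.
  intros Ha. destruct (Rtotal_order x 0) as [Hx | [-> | Hx]].
  - apply (continuity_pt_ext_loc (fun _ => 0)); [apply rpow_locally_zero; auto |].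
    apply continuity_pt_const; intros u v; auto.
  - intros eps He. exists (Rpower eps (/ a)). split; [apply Rpower_gt0 |].
    intros y [_ Hy]. simpl in *. unfold R_dist in *.
    rewrite (rpow_nonpos 0) by lra. rewrite Rminus_0_r in *.
    unfold rpow. destruct (Rle_dec y 0) as [Hy0 | Hy0].
    + rewrite Rabs_R0; auto.
    + rewrite Rabs_right in * by (try left; try apply Rpower_gt0; lra).
      apply Rpower_lt_of_lt_root; lra.
  - apply (continuity_pt_ext_loc (fun y => Rpower y a)); [apply rpow_locally_Rpower; auto |].
    apply derivable_continuous_pt. exists (a * Rpower x (a - 1)).
    apply derivable_pt_lim_power; auto.
Qed.

(* For exponents s > 1 the derivative s t^(s-1) is also correct at t = 0. *)
Lemma is_derive_rpow s x : 1 < s -> is_derive (fun y => rpow y s) x (s * rpow x (s - 1)).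
Proof.
  intros Hs. destruct (Rtotal_order x 0) as [Hx | [-> | Hx]].
  - rewrite (rpow_nonpos x), Rmult_0_r by lra.
    apply (is_derive_ext_loc (fun _ => 0)); [apply rpow_locally_zero; auto |].
    apply is_derive_Reals, derivable_pt_lim_const.
  - rewrite (rpow_nonpos 0), Rmult_0_r by lra.
    apply is_derive_Reals. intros eps He.
    exists (mkposreal _ (Rpower_gt0 eps (/ (s - 1)))). intros h Hh Hlt. simpl in Hlt.
    rewrite Rplus_0_l, (rpow_nonpos 0), !Rminus_0_r by lra.
    unfold rpow. destruct (Rle_dec h 0).
    + unfold Rdiv. rewrite Rmult_0_l, Rabs_R0; auto.
    + rewrite Rabs_right in Hlt by lra.
      replace (Rpower h s / h) with (Rpower h (s - 1)).
      * rewrite Rabs_right by (left; apply Rpower_gt0).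
        apply Rpower_lt_of_lt_root; lra.
      * replace s with ((s - 1) + 1) at 2 by ring.
        rewrite Rpower_plus, Rpower_1 by lra. field. lra.
  - rewrite rpow_Rpower by lra. apply is_derive_Reals, derivable_pt_lim_rpow; auto.
Qed.

Lemma rpow_increment_antimono p x y h : 0 < p < 1 -> 0 <= x <= y -> 0 <= h ->
  rpow (y + h) p - rpow y p <= rpow (x + h) p - rpow x p.
Proof.
  intros Hp Hxy Hh.
  destruct (Req_dec x y) as [-> | Hne]; [lra |].
  set (q := fun t => rpow (t + h) p - rpow t p).
  (* MVT_gen only locates c in the closed interval, where c = 0 is possible. *)
  set (dq := fun t => if Rle_dec t 0 then 0
                      else p * Rpower (t + h) (p - 1) - p * Rpower t (p - 1)).
  destruct (MVT_gen q x y dq) as [c [Hc Heq]].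
  - intros t Ht. rewrite Rmin_left in Ht by lra. unfold dq.
    destruct (Rle_dec t 0); [lra |]. apply is_derive_Reals.
    apply derivable_pt_lim_minus; [| apply derivable_pt_lim_rpow; lra].
    replace (p * Rpower (t + h) (p - 1)) with (p * Rpower (t + h) (p - 1) * (1 + 0)) by ring.
    apply (derivable_pt_lim_comp (fun t => t + h) (fun u => rpow u p)).
    + apply derivable_pt_lim_plus; [apply derivable_pt_lim_id | apply derivable_pt_lim_const].
    + apply derivable_pt_lim_rpow; lra.
  - intros t _. apply continuity_pt_minus; [| apply continuous_rpow; lra].
    apply (continuity_pt_comp (fun t => t + h) (fun u => rpow u p));
      [| apply continuous_rpow; lra].
    apply continuity_pt_plus; [apply continuity_pt_id | apply continuity_pt_const; intros u v; auto].
  - rewrite Rmin_left, Rmax_right in Hc by lra.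
    assert (dq c <= 0).
    { unfold dq. destruct (Rle_dec c 0); [lra |].
      assert (Rpower (c + h) (p - 1) <= Rpower c (p - 1)) by (apply Rpower_le_neg_exponent; lra).
      nra. }
    assert (dq c * (y - x) <= 0) by nra.
    unfold q in Heq. lra.
Qed.

(* The exchange inequality behind the optimality of the sorted tour: inserting a
   point M to the right of [lo, hi] costs least when it is joined to the two ends
   hi and lo instead of to an arbitrary edge {a, b} of points of [lo, hi]. *)
Lemma tour_insertion_ineq p lo hi a b M : 0 < p < 1 ->
  lo <= a <= hi -> lo <= b <= hi -> hi <= M ->
  rpow (M - hi) p + rpow (M - lo) p - rpow (hi - lo) p <=
  rpow (Rabs (M - a)) p + rpow (Rabs (M - b)) p - rpow (Rabs (a - b)) p.
Proof.
  intros Hp Ha Hb HM.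
  assert (ordered_case : forall a b, lo <= a <= hi -> lo <= b <= hi -> a <= b ->
    rpow (M - hi) p + rpow (M - lo) p - rpow (hi - lo) p <=
    rpow (M - a) p + rpow (M - b) p - rpow (b - a) p).
  { clear a b Ha Hb. intros a b Ha Hb Hab.
    assert (H1 := rpow_increment_antimono p (b - a) (M - lo - (M - b)) (M - b) Hp).
    replace (b - a + (M - b)) with (M - a) in H1 by ring.
    replace (M - lo - (M - b) + (M - b)) with (M - lo) in H1 by ring.
    assert (rpow (M - hi) p <= rpow (M - b) p) by (apply rpow_le_compat; lra).
    assert (rpow (M - lo - (M - b)) p <= rpow (hi - lo) p) by (apply rpow_le_compat; lra).
    assert (rpow (M - lo) p - rpow (M - lo - (M - b)) p <= rpow (M - a) p - rpow (b - a) p)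
      by (apply H1; lra).
    lra. }
  rewrite (Rabs_right (M - a)), (Rabs_right (M - b)) by lra.
  destruct (Rle_dec a b).
  - rewrite Rabs_left1, Ropp_minus_distr by lra. apply ordered_case; auto.
  - rewrite Rabs_right by lra. specialize (ordered_case b a Hb Ha ltac:(lra)). lra.
Qed.

(** * The optimal tour visits the points in sorted order *)

Fixpoint insert_by {A : Type} (k : A -> R) (y : A) (s : list A) : list A :=
  match s with
  | nil => y :: nil
  | x :: s' => if Rle_dec (k y) (k x) then y :: x :: s' else x :: insert_by k y s'
  end.

Definition sort_by {A : Type} (k : A -> R) (l : list A) : list A :=
  fold_left (fun acc x => insert_by k x acc) l nil.

Definition insertR (y : R) (s : list R) : list R := insert_by (fun x => x) y s.
Definition sortR (l : list R) : list R := sort_by (fun x => x) l.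

Fixpoint sortedR (s : list R) : Prop :=
  match s with
  | x :: ((y :: _) as s') => x <= y /\ sortedR s'
  | _ => True
  end.

Definition headR (s : list R) : R := hd 0 s.
Definition lastR (s : list R) : R := last s 0.

Lemma map_insert_by {A} (k : A -> R) y s : map k (insert_by k y s) = insertR (k y) (map k s).
Proof.
  induction s as [|x s IH]; simpl; auto.
  unfold insertR; simpl. destruct (Rle_dec (k y) (k x)); simpl; auto. rewrite IH; auto.
Qed.

Lemma map_sort_by {A} (k : A -> R) l : map k (sort_by k l) = sortR (map k l).
Proof.
  unfold sort_by, sortR, sort_by. change (@nil R) with (map k (@nil A)).
  generalize (@nil A) as acc. induction l as [|x l IH]; intros acc; simpl; auto.
  rewrite IH, map_insert_by; auto.
Qed.

Lemma Permutation_insert_by {A} (k : A -> R) y s : Permutation (insert_by k y s) (y :: s).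
Proof.
  induction s as [|x s IH]; simpl; auto.
  destruct (Rle_dec (k y) (k x)); auto.
  eapply perm_trans; [apply perm_skip, IH | apply perm_swap].
Qed.

Lemma Permutation_sort_by {A} (k : A -> R) l : Permutation (sort_by k l) l.
Proof.
  unfold sort_by. change l with (nil ++ l) at 2. generalize (@nil A) as acc.
  induction l as [|x l IH]; intros acc; simpl.
  - rewrite app_nil_r; auto.
  - eapply perm_trans; [apply IH |].
    eapply perm_trans; [apply Permutation_app_tail, Permutation_insert_by |].
    apply Permutation_middle.
Qed.

Lemma sortedR_tail x s : sortedR (x :: s) -> sortedR s.
Proof. destruct s; simpl; tauto. Qed.

Lemma sortedR_head_le x s : sortedR (x :: s) -> forall z, In z s -> x <= z.
Proof.
  revert x. induction s as [|y s IH]; intros x Hs z Hz; simpl in *; [tauto |].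
  destruct Hs as [Hxy Hs]. destruct Hz as [<- | Hz]; auto.
  specialize (IH y Hs z Hz). lra.
Qed.

Lemma sortedR_insertR y s : sortedR s -> sortedR (insertR y s).
Proof.
  unfold insertR. induction s as [|x s IH]; intros Hs; simpl; auto.
  destruct (Rle_dec y x); simpl; [split; auto |].
  specialize (IH (sortedR_tail _ _ Hs)).
  destruct s as [|z s]; simpl in *; [split; [lra | auto] |].
  destruct (Rle_dec y z); simpl in *; split; try lra; tauto.
Qed.

Lemma sortedR_sortR l : sortedR (sortR l).
Proof.
  unfold sortR, sort_by. assert (H : sortedR nil) by exact I. revert H.
  generalize (@nil R) as acc.
  induction l as [|x l IH]; intros acc Ha; simpl; auto. apply IH, sortedR_insertR; auto.
Qed.

Lemma sortedR_Permutation_eq s1 s2 : sortedR s1 -> sortedR s2 -> Permutation s1 s2 -> s1 = s2.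
Proof.
  revert s2. induction s1 as [|x s1 IH]; intros s2 H1 H2 HP.
  - apply Permutation_nil in HP; auto.
  - destruct s2 as [|y s2]; [apply Permutation_sym, Permutation_nil_cons in HP; tauto |].
    assert (x = y).
    { assert (Hy : In y (x :: s1)) by (apply (Permutation_in (l := y :: s2)); [symmetry | left]; auto).
      assert (Hx : In x (y :: s2)) by (apply (Permutation_in (l := x :: s1)); [| left]; auto).
      destruct Hy as [Hy | Hy]; auto. destruct Hx as [Hx | Hx]; auto.
      assert (A1 := sortedR_head_le _ _ H1 _ Hy). assert (A2 := sortedR_head_le _ _ H2 _ Hx). lra. }
    subst y. f_equal. apply IH; eauto using sortedR_tail, Permutation_cons_inv.
Qed.

Lemma sortR_Permutation l1 l2 : Permutation l1 l2 -> sortR l1 = sortR l2.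
Proof.
  intros HP. apply sortedR_Permutation_eq; try apply sortedR_sortR.
  unfold sortR. rewrite (Permutation_sort_by _ l1), (Permutation_sort_by _ l2). exact HP.
Qed.

Lemma sortR_snoc l y : sortR (l ++ y :: nil) = insertR y (sortR l).
Proof. unfold sortR, sort_by. rewrite fold_left_app. reflexivity. Qed.

Lemma sortR_neq_nil l : l <> nil -> sortR l <> nil.
Proof.
  intros Hl E. apply Hl, Permutation_nil. rewrite <- E. apply (Permutation_sort_by (fun x => x)).
Qed.

Lemma In_sortR z l : In z (sortR l) <-> In z l.
Proof. split; apply Permutation_in; [| symmetry]; apply (Permutation_sort_by (fun x => x)). Qed.

Lemma lastR_cons2 x y s : lastR (x :: y :: s) = lastR (y :: s).
Proof. reflexivity. Qed.

Lemma In_lastR s : s <> nil -> In (lastR s) s.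
Proof.
  induction s as [|x s IH]; intros H; [congruence |].
  destruct s as [|y s]; [left; auto |]. rewrite lastR_cons2. right. apply IH; congruence.
Qed.

Lemma sortedR_bounds s : sortedR s -> forall z, In z s -> headR s <= z <= lastR s.
Proof.
  induction s as [|x s IH]; intros Hs z Hz; [destruct Hz |].
  unfold headR; simpl hd. split.
  - destruct Hz as [<- | Hz]; [lra | apply (sortedR_head_le _ _ Hs _ Hz)].
  - destruct s as [|y s].
    + destruct Hz as [<- | []]. unfold lastR; simpl; lra.
    + rewrite lastR_cons2. assert (Hs' := sortedR_tail _ _ Hs).
      destruct Hz as [<- | Hz]; [| apply (IH Hs' z Hz)].
      assert (y <= lastR (y :: s)) by (apply (IH Hs' y); left; auto).
      simpl in Hs. lra.
Qed.

Lemma insertR_le y a s : y <= a -> insertR y (a :: s) = y :: a :: s.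
Proof. intros H; unfold insertR; simpl; destruct (Rle_dec y a); [auto | lra]. Qed.

Lemma insertR_gt y a s : ~ y <= a -> insertR y (a :: s) = a :: insertR y s.
Proof. intros H; unfold insertR; simpl; destruct (Rle_dec y a); [lra | auto]. Qed.

Lemma insertR_cons y s : exists w t, insertR y s = w :: t.
Proof. destruct s as [|x s]; unfold insertR; simpl; [| destruct (Rle_dec y x)]; eauto. Qed.

Lemma insertR_neq_nil y s : insertR y s <> nil.
Proof. destruct (insertR_cons y s) as [w [t ->]]. congruence. Qed.

Lemma headR_insertR y s : s <> nil -> headR (insertR y s) = Rmin y (headR s).
Proof.
  intros Hn. destruct s as [|x s]; [congruence |]. unfold headR; simpl hd.
  destruct (Rle_dec y x).
  - rewrite insertR_le, Rmin_left; auto.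
  - rewrite insertR_gt, Rmin_right; auto; lra.
Qed.

Lemma lastR_insertR y s : s <> nil -> sortedR s -> lastR (insertR y s) = Rmax y (lastR s).
Proof.
  intros Hn Hs. induction s as [|x s IH]; [congruence |].
  assert (Hx : x <= lastR (x :: s)) by (apply (sortedR_bounds _ Hs); left; auto).
  destruct (Rle_dec y x).
  - rewrite insertR_le, lastR_cons2, Rmax_right; auto; lra.
  - rewrite insertR_gt by auto. destruct s as [|z s].
    + unfold lastR, insertR; simpl. rewrite Rmax_left; lra.
    + destruct (insertR_cons y (z :: s)) as [w [t Ht]].
      rewrite Ht, lastR_cons2, <- Ht, lastR_cons2.
      apply IH; [congruence | apply (sortedR_tail x); auto].
Qed.

Fixpoint sum_pairs (h : R -> R -> R) (s : list R) : R :=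
  match s with
  | x :: ((y :: _) as s') => h x y + sum_pairs h s'
  | _ => 0
  end.

Lemma sum_pairs_cons2 h x y s : sum_pairs h (x :: y :: s) = h x y + sum_pairs h (y :: s).
Proof. reflexivity. Qed.

Lemma sum_pairs_plus h1 h2 s :
  sum_pairs (fun a b => h1 a b + h2 a b) s = sum_pairs h1 s + sum_pairs h2 s.
Proof.
  induction s as [|x [|y s] IH]; simpl in *; try ring. rewrite IH. ring.
Qed.

Lemma sum_pairs_ext_sorted h1 h2 s : (forall a b, a <= b -> h1 a b = h2 a b) ->
  sortedR s -> sum_pairs h1 s = sum_pairs h2 s.
Proof.
  intros H. induction s as [|x [|y s] IH]; intros Hs; auto.
  destruct Hs as [Hxy Hs].
  change (h1 x y + sum_pairs h1 (y :: s) = h2 x y + sum_pairs h2 (y :: s)).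
  rewrite H, IH; auto.
Qed.

Lemma sum_pairs_snoc h l z :
  sum_pairs h (l ++ z :: nil) = sum_pairs h l + match l with nil => 0 | _ => h (lastR l) z end.
Proof.
  induction l as [|x [|y l] IH]; simpl; [ring | unfold lastR; simpl; ring |].
  simpl in IH. rewrite IH, lastR_cons2. ring.
Qed.

Definition clamp (a b y : R) : R := Rmin (Rmax y a) b.

(* Change of a gap sum [sum phi (b - a)] when y is inserted into the gap [a, b];
   it vanishes when y lies outside [a, b] because phi 0 = 0. *)
Definition split_gap (phi : R -> R) (a b y : R) : R :=
  phi (clamp a b y - a) + phi (b - clamp a b y) - phi (b - a).

Lemma sum_split_gap_below phi s y : phi 0 = 0 -> sortedR s ->
  (forall z, In z s -> y <= z) -> sum_pairs (fun a b => split_gap phi a b y) s = 0.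
Proof.
  intros H0. induction s as [|x [|z s] IH]; intros Hs Hy; auto.
  rewrite sum_pairs_cons2, IH by (simpl in *; tauto || (intros w Hw; apply Hy; right; auto)).
  assert (y <= x) by (apply Hy; left; auto). simpl in Hs.
  unfold split_gap, clamp. rewrite Rmax_right, Rmin_left, Rminus_diag, H0 by lra. ring.
Qed.

Lemma sum_split_gap_above phi s y : phi 0 = 0 -> sortedR s ->
  (forall z, In z s -> z <= y) -> sum_pairs (fun a b => split_gap phi a b y) s = 0.
Proof.
  intros H0. induction s as [|x [|z s] IH]; intros Hs Hy; auto.
  rewrite sum_pairs_cons2, IH by (simpl in *; tauto || (intros w Hw; apply Hy; right; auto)).
  assert (z <= y) by (apply Hy; right; left; auto). simpl in Hs.
  unfold split_gap, clamp. rewrite Rmax_left, Rmin_right, Rminus_diag, H0 by lra. ring.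
Qed.

Lemma sum_pairs_insertR phi y s : phi 0 = 0 -> s <> nil -> sortedR s ->
  sum_pairs (fun a b => phi (b - a)) (insertR y s) =
  sum_pairs (fun a b => phi (b - a)) s + sum_pairs (fun a b => split_gap phi a b y) s
  + phi (headR s - Rmin y (headR s)) + phi (Rmax y (lastR s) - lastR s).
Proof.
  intros H0. induction s as [|a [|b s] IH]; intros Hn Hs; [congruence | |].
  - unfold insertR, headR, lastR; simpl.
    destruct (Rle_dec y a); simpl.
    + rewrite Rmin_left, Rmax_right, Rminus_diag, H0 by lra. ring.
    + rewrite Rmin_right, Rmax_left, Rminus_diag, H0 by lra. ring.
  - assert (Hbounds := sortedR_bounds _ Hs). simpl in Hs. destruct Hs as [Hab Hs].
    unfold headR; simpl hd. rewrite lastR_cons2 in *.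
    assert (Hl : a <= lastR (b :: s)) by (apply Hbounds; left; auto).
    destruct (Rle_dec y a).
    + rewrite insertR_le, sum_split_gap_below by (auto; try exact (conj Hab Hs);
        intros z Hz; apply Hbounds in Hz; unfold headR in Hz; simpl in Hz; lra).
      rewrite Rmin_left, Rmax_right, Rminus_diag, H0 by lra. simpl. ring.
    + rewrite insertR_gt by auto.
      destruct (insertR_cons y (b :: s)) as [w [t Ht]].
      assert (Hw : w = Rmin y b).
      { assert (E := headR_insertR y (b :: s) ltac:(congruence)). rewrite Ht in E. exact E. }
      rewrite Ht. change (sum_pairs (fun a b => phi (b - a)) (a :: w :: t)) with
        (phi (w - a) + sum_pairs (fun a b => phi (b - a)) (w :: t)).
      rewrite <- Ht, IH by (auto; congruence). simpl. unfold headR; simpl hd.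
      unfold split_gap, clamp. rewrite Hw, (Rmax_left y a), (Rmin_right y a), Rminus_diag, H0 by lra.
      ring.
Qed.

Definition edge_cost (p a b : R) : R := rpow (Rabs (a - b)) p.
Definition pts_path_cost (p : R) (l : list R) : R := sum_pairs (edge_cost p) l.
Definition pts_cycle_cost (p : R) (l : list R) : R :=
  match l with nil => 0 | x :: _ => pts_path_cost p (l ++ x :: nil) end.

Lemma edge_cost_sym p a b : edge_cost p a b = edge_cost p b a.
Proof. unfold edge_cost. rewrite Rabs_minus_sym. auto. Qed.

Lemma path_cost_map p xs c : path_cost p xs c = pts_path_cost p (map (pt xs) c).
Proof. induction c as [|i [|j c] IH]; auto. simpl in *. rewrite IH. reflexivity. Qed.

Lemma cycle_cost_map p xs c : cycle_cost p xs c = pts_cycle_cost p (map (pt xs) c).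
Proof. destruct c as [|i c]; auto. unfold cycle_cost. rewrite path_cost_map, map_app. auto. Qed.

Lemma pts_cycle_cost_cons p x l :
  pts_cycle_cost p (x :: l) = pts_path_cost p (x :: l) + edge_cost p (lastR (x :: l)) x.
Proof. unfold pts_cycle_cost, pts_path_cost. rewrite (sum_pairs_snoc _ (x :: l)). auto. Qed.

Lemma pts_cycle_cost_rotate1 p x l : pts_cycle_cost p (x :: l) = pts_cycle_cost p (l ++ x :: nil).
Proof.
  destruct l as [|y l]; auto.
  rewrite pts_cycle_cost_cons. simpl app. rewrite pts_cycle_cost_cons.
  unfold pts_path_cost. change (y :: l ++ x :: nil) with ((y :: l) ++ x :: nil).
  rewrite sum_pairs_snoc, sum_pairs_cons2, lastR_cons2.
  assert (E : lastR ((y :: l) ++ x :: nil) = x) by apply last_last.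
  rewrite E, (edge_cost_sym p x y). ring.
Qed.

Lemma pts_cycle_cost_rotate p l1 l2 : pts_cycle_cost p (l1 ++ l2) = pts_cycle_cost p (l2 ++ l1).
Proof.
  revert l2. induction l1 as [|x l1 IH]; intros l2.
  - rewrite app_nil_r. auto.
  - rewrite <- app_comm_cons, pts_cycle_cost_rotate1, <- app_assoc, IH, <- app_assoc. auto.
Qed.

Lemma pts_cycle_cost_insert_front p M r l :
  pts_cycle_cost p (M :: r :: l) = pts_cycle_cost p (r :: l)
    + edge_cost p M r + edge_cost p M (lastR (r :: l)) - edge_cost p r (lastR (r :: l)).
Proof.
  rewrite !pts_cycle_cost_cons, lastR_cons2.
  unfold pts_path_cost; simpl sum_pairs.
  rewrite (edge_cost_sym p (lastR (r :: l)) M), (edge_cost_sym p (lastR (r :: l)) r). ring.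
Qed.

Lemma pts_cycle_cost_sorted p s : s <> nil -> sortedR s ->
  pts_cycle_cost p s = sum_pairs (fun a b => rpow (b - a) p) s + rpow (lastR s - headR s) p.
Proof.
  intros Hn Hs. destruct s as [|x s]; [congruence |]. rewrite pts_cycle_cost_cons.
  assert (x <= lastR (x :: s)) by (apply (sortedR_bounds _ Hs); left; auto).
  unfold headR, edge_cost; simpl hd. f_equal.
  - apply sum_pairs_ext_sorted; auto. intros a b Hab.
    unfold edge_cost. rewrite Rabs_left1, Ropp_minus_distr by lra. auto.
  - rewrite Rabs_right by lra. auto.
Qed.

Definition sorted_tour_cost (p : R) (l : list R) : R := pts_cycle_cost p (sortR l).

Lemma sorted_tour_cost_perm p l1 l2 :
  Permutation l1 l2 -> sorted_tour_cost p l1 = sorted_tour_cost p l2.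
Proof. intros H. unfold sorted_tour_cost. rewrite (sortR_Permutation _ _ H). auto. Qed.

Lemma sorted_tour_cost_snoc_max p rest M : 0 < p -> rest <> nil ->
  (forall z, In z rest -> z <= M) ->
  let s := sortR rest in
  sorted_tour_cost p (rest ++ M :: nil) = sorted_tour_cost p rest
    + rpow (M - lastR s) p + rpow (M - headR s) p - rpow (lastR s - headR s) p.
Proof.
  intros Hp Hn HM s.
  assert (Hsn : s <> nil) by (apply sortR_neq_nil; auto).
  assert (Hss : sortedR s) by apply sortedR_sortR.
  assert (HsM : forall z, In z s -> z <= M) by (intros z Hz; apply HM, In_sortR; auto).
  assert (Hhl := sortedR_bounds s Hss (lastR s) (In_lastR s Hsn)).
  assert (HlM : lastR s <= M) by (apply HsM, In_lastR; auto).
  assert (H0 : rpow 0 p = 0) by (apply rpow_nonpos; lra).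
  unfold sorted_tour_cost. rewrite sortR_snoc. fold s.
  rewrite !pts_cycle_cost_sorted by (auto using insertR_neq_nil, sortedR_insertR).
  rewrite (sum_pairs_insertR (fun t => rpow t p)), sum_split_gap_above by auto.
  rewrite headR_insertR, lastR_insertR, Rmin_right, Rmax_left, Rminus_diag, H0 by (auto; lra).
  ring.
Qed.

Lemma exists_max_In (l : list R) : l <> nil -> exists M, In M l /\ forall z, In z l -> z <= M.
Proof.
  induction l as [|x [|y l] IH]; intros H; [congruence | |].
  - exists x. split; [left; auto | intros z [<- | []]; lra].
  - destruct IH as [M [HM1 HM2]]; [congruence |].
    destruct (Rle_dec x M).
    + exists M. split; [right; auto | intros z [<- | Hz]; auto].
    + exists x. split; [left; auto |].
      intros z [<- | Hz]; [lra | specialize (HM2 z Hz); lra].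
Qed.

(* Induction on the number of points, removing the largest one M: by
   tour_insertion_ineq, M is best attached to the two extreme remaining points. *)
Lemma sorted_tour_cost_le p l : 0 < p < 1 -> sorted_tour_cost p l <= pts_cycle_cost p l.
Proof.
  intros Hp. remember (length l) as n eqn:Hl. revert l Hl.
  induction n as [|n IH]; intros l Hl.
  - destruct l; [| discriminate]. unfold sorted_tour_cost, sortR, sort_by; simpl. lra.
  - destruct (exists_max_In l) as [M [HMin HMmax]]; [destruct l; discriminate |].
    destruct (in_split _ _ HMin) as [l1 [l2 ->]].
    assert (Hperm : Permutation (l1 ++ M :: l2) ((l2 ++ l1) ++ M :: nil)).
    { rewrite <- Permutation_middle, <- Permutation_cons_append. apply perm_skip, Permutation_app_comm. }
    assert (HM : forall z, In z (l2 ++ l1) -> z <= M).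
    { intros z Hz. apply HMmax, in_or_app.
      apply in_app_or in Hz as [Hz | Hz]; [right; right | left]; auto. }
    rewrite (sorted_tour_cost_perm _ _ _ Hperm).
    rewrite pts_cycle_cost_rotate. simpl app.
    rewrite length_app in Hl. simpl in Hl.
    destruct (l2 ++ l1) as [|r rest] eqn:Erest.
    + simpl. unfold sorted_tour_cost, sortR, sort_by. simpl. lra.
    + rewrite sorted_tour_cost_snoc_max, pts_cycle_cost_insert_front by (auto; lra || congruence).
      set (s := sortR (r :: rest)).
      assert (Hss : sortedR s) by apply sortedR_sortR.
      assert (Hb : forall z, In z (r :: rest) -> headR s <= z <= lastR s).
      { intros z Hz. apply sortedR_bounds, In_sortR; auto. }
      assert (Hlast := In_lastR (r :: rest) ltac:(congruence)).
      assert (IHr := IH (r :: rest) ltac:(rewrite <- Erest, length_app; simpl; lia)).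
      assert (K := tour_insertion_ineq p (headR s) (lastR s) r (lastR (r :: rest)) M Hp
        (Hb r (or_introl eq_refl)) (Hb _ Hlast)
        (HM _ (proj1 (In_sortR _ _) (In_lastR s (sortR_neq_nil (r :: rest) ltac:(congruence)))))).
      unfold edge_cost. lra.
Qed.

Lemma map_pt_seq xs : map (pt xs) (seq 0 (length xs)) = xs.
Proof.
  induction xs as [|x xs IH]; auto. simpl. f_equal.
  rewrite <- seq_shift, map_map. exact IH.
Qed.

Lemma is_min_cost_sorted N p xs : 0 < p < 1 -> length xs = N ->
  is_min_cost N p xs (sorted_tour_cost p xs).
Proof.
  intros Hp <-. split.
  - exists (sort_by (pt xs) (seq 0 (length xs))). split.
    + apply Permutation_sort_by.
    + rewrite cycle_cost_map, map_sort_by, map_pt_seq. auto.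
  - intros c Hc. rewrite cycle_cost_map.
    rewrite (sorted_tour_cost_perm p xs (map (pt xs) c)).
    + apply sorted_tour_cost_le; auto.
    + rewrite <- (map_pt_seq xs) at 1. apply Permutation_map. symmetry; auto.
Qed.

Lemma E_N_sorted N p xs : 0 < p < 1 -> length xs = N -> E_N N p xs = sorted_tour_cost p xs.
Proof.
  intros Hp Hl. assert (H := is_min_cost_sorted N p xs Hp Hl). unfold E_N.
  destruct (constructive_indefinite_description _ _) as [m [Hm | Hm]]; simpl.
  - destruct Hm as [[c [Hc1 Hc2]] Hm2]. destruct H as [[c' [Hc1' Hc2']] H2].
    apply Rle_antisym; [rewrite <- Hc2'; apply Hm2 | rewrite <- Hc2; apply H2]; auto.
  - exfalso. apply Hm. eauto.
Qed.

(* Coquelicot states these for an arbitrary normed module, with [plus]/[scal];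
   specialised to [R] they unify directly with goals written using [+] and [*]. *)
Lemma is_RInt_plusR (f g : R -> R) (a b If Ig : R) : is_RInt f a b If -> is_RInt g a b Ig ->
  is_RInt (fun y => f y + g y) a b (If + Ig).
Proof. exact (is_RInt_plus f g a b If Ig). Qed.

Lemma is_RInt_minusR (f g : R -> R) (a b If Ig : R) : is_RInt f a b If -> is_RInt g a b Ig ->
  is_RInt (fun y => f y - g y) a b (If - Ig).
Proof. exact (is_RInt_minus f g a b If Ig). Qed.

Lemma is_RInt_scalR (f : R -> R) (a b k If : R) : is_RInt f a b If ->
  is_RInt (fun y => k * f y) a b (k * If).
Proof. exact (is_RInt_scal f a b k If). Qed.

Lemma is_RInt_constR (a b c : R) : is_RInt (fun _ => c) a b ((b - a) * c).
Proof. exact (@is_RInt_const R_NormedModule a b c). Qed.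

Lemma is_RInt_ChaslesR (f : R -> R) (a b c l1 l2 : R) : is_RInt f a b l1 -> is_RInt f b c l2 ->
  is_RInt f a c (l1 + l2).
Proof. exact (is_RInt_Chasles f a b c l1 l2). Qed.

Lemma is_RInt_uniqueR (f : R -> R) (a b l : R) : is_RInt f a b l -> RInt f a b = l.
Proof. exact (@is_RInt_unique R_CompleteNormedModule f a b l). Qed.

Lemma is_RInt_value (f : R -> R) (a b l l' : R) : is_RInt f a b l -> l = l' -> is_RInt f a b l'.
Proof. intros H ->; auto. Qed.

Lemma is_RInt_ext_open (f g : R -> R) (a b l : R) : a <= b ->
  (forall x, a < x < b -> f x = g x) -> is_RInt f a b l -> is_RInt g a b l.
Proof. intros Hab H. apply is_RInt_ext. intros x. rewrite Rmin_left, Rmax_right; auto. Qed.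

Lemma is_RInt_ext_all (f g : R -> R) (a b l : R) : (forall x, f x = g x) ->
  is_RInt f a b l -> is_RInt g a b l.
Proof. intros H. apply is_RInt_ext. intros; apply H. Qed.

Lemma RInt_ext01 (f g : R -> R) : (forall x, f x = g x) -> RInt f 0 1 = RInt g 0 1.
Proof. intros H. apply (@RInt_ext R_CompleteNormedModule). intros; apply H. Qed.

Lemma is_RInt_Riemann (g : R -> R) (v : R) :
  is_RInt g 0 1 v -> exists pr : Riemann_integrable g 0 1, RiemannInt pr = v.
Proof.
  intros H. assert (Hex : ex_RInt g 0 1) by (exists v; auto).
  exists (ex_RInt_Reals_0 g 0 1 Hex). rewrite <- RInt_Reals. apply is_RInt_uniqueR; auto.
Qed.

Lemma continuity_identity : continuity (fun x => x).
Proof. apply derivable_continuous, derivable_id. Qed.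

Lemma continuity_constant (c : R) : continuity (fun _ => c).
Proof. apply continuity_const. intros u v; auto. Qed.

Lemma continuity_one_minus : continuity (fun x => 1 - x).
Proof. apply continuity_minus; [apply continuity_constant | apply continuity_identity]. Qed.

Lemma continuity_power n : continuity (fun x => x ^ n).
Proof. apply derivable_continuous, derivable_pow. Qed.

Lemma continuity_one_minus_power n : continuity (fun x => (1 - x) ^ n).
Proof. apply (continuity_comp (fun x => 1 - x) (fun x => x ^ n)); [apply continuity_one_minus | apply continuity_power]. Qed.

Lemma continuity_continuous (f : R -> R) x : continuity f -> continuous f x.
Proof. intros H. apply continuity_pt_filterlim, H. Qed.

Lemma is_RInt_RInt (f : R -> R) a b : continuity f -> is_RInt f a b (RInt f a b).
Proof.
  intros H. apply (@RInt_correct R_CompleteNormedModule), (@ex_RInt_continuous R_CompleteNormedModule).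
  intros z _. apply continuity_continuous, H.
Qed.

Lemma is_RInt_derivable_pt_lim (F f : R -> R) a b : (forall x, derivable_pt_lim F x (f x)) ->
  continuity f -> is_RInt f a b (F b - F a).
Proof.
  intros HF Hf. apply (@is_RInt_derive R_CompleteNormedModule).
  - intros x _. apply is_derive_Reals, HF.
  - intros x _. apply continuity_continuous, Hf.
Qed.

Definition prim (f : R -> R) (x : R) : R := RInt f 0 x.

Section Primitive.
Variable f : R -> R.
Hypothesis Hf : continuity f.

Lemma prim0 : prim f 0 = 0.
Proof. exact (@RInt_point R_CompleteNormedModule 0 f). Qed.

Lemma is_RInt_prim a b : is_RInt f a b (prim f b - prim f a).
Proof.
  assert (E : prim f b = prim f a + RInt f a b).
  { symmetry. apply (@RInt_Chasles R_CompleteNormedModule f 0 a b);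
      [exists (RInt f 0 a) | exists (RInt f a b)]; apply is_RInt_RInt, Hf. }
  assert (E' : prim f b - prim f a = RInt f a b) by (rewrite E; ring).
  rewrite E'. apply is_RInt_RInt, Hf.
Qed.

Lemma derivable_pt_lim_prim x : derivable_pt_lim (prim f) x (f x).
Proof.
  apply is_derive_Reals, (is_derive_RInt f (prim f) 0 x).
  - apply filter_forall. intros b. apply is_RInt_RInt, Hf.
  - apply continuity_continuous, Hf.
Qed.

Lemma continuity_prim : continuity (prim f).
Proof. intros x. apply derivable_continuous_pt. exists (f x). apply derivable_pt_lim_prim. Qed.

Lemma is_RInt_shift a b c : is_RInt (fun y => f (y - c)) a b (prim f (b - c) - prim f (a - c)).
Proof.
  eapply is_RInt_ext_all; [| eapply is_RInt_value;
    [apply (is_RInt_comp_lin f 1 (- c) a b), is_RInt_prim |]].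
  - intros y. simpl. unfold scal; simpl. unfold mult; simpl.
    replace (1 * y + - c) with (y - c) by ring. ring.
  - replace (1 * a + - c) with (a - c) by ring. replace (1 * b + - c) with (b - c) by ring. auto.
Qed.

Lemma is_RInt_reflect a b c : is_RInt (fun y => f (c - y)) a b (prim f (c - a) - prim f (c - b)).
Proof.
  assert (H := is_RInt_comp_lin f (-1) c a b _ (is_RInt_prim (-1 * a + c) (-1 * b + c))).
  apply (is_RInt_scalR _ a b (-1)) in H.
  eapply is_RInt_ext_all; [| eapply is_RInt_value; [exact H |]].
  - intros y. simpl. unfold scal; simpl. unfold mult; simpl.
    replace (-1 * y + c) with (c - y) by ring. ring.
  - replace (-1 * a + c) with (c - a) by ring. replace (-1 * b + c) with (c - b) by ring.
    simpl. ring.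
Qed.

End Primitive.

Lemma is_RInt_reflect01 (g : R -> R) (l : R) : is_RInt g 0 1 l -> is_RInt (fun x => g (1 - x)) 0 1 l.
Proof.
  intros H. apply is_RInt_swap in H.
  assert (H' : is_RInt g (-1 * 0 + 1) (-1 * 1 + 1) (opp l)).
  { replace (-1 * 0 + 1) with 1 by ring. replace (-1 * 1 + 1) with 0 by ring. exact H. }
  apply (is_RInt_comp_lin g (-1) 1 0 1), (is_RInt_scalR _ 0 1 (-1)) in H'.
  eapply is_RInt_ext_all; [| eapply is_RInt_value; [exact H' |]].
  - intros x. simpl. unfold scal; simpl. unfold mult; simpl.
    replace (-1 * x + 1) with (1 - x) by ring. ring.
  - unfold opp; simpl. ring.
Qed.

(** * Integrating out one uniform point *)

Section Pieces.
Variable f : R -> R.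
Hypothesis Hf : continuity f.

Lemma is_RInt_gap_below m : 0 <= m <= 1 -> f 0 = 0 ->
  is_RInt (fun y => f (m - Rmin y m)) 0 1 (prim f m).
Proof.
  intros Hm H0. eapply is_RInt_value; [eapply is_RInt_ChaslesR with (b := m) |].
  - eapply is_RInt_ext_open; [lra | | apply (is_RInt_reflect f Hf 0 m m)].
    intros x Hx. rewrite Rmin_left by lra. auto.
  - eapply is_RInt_ext_open; [lra | | apply (is_RInt_constR m 1 0)].
    intros x Hx. rewrite Rmin_right, Rminus_diag by lra. auto.
  - rewrite Rminus_0_r, Rminus_diag, prim0. ring.
Qed.

Lemma is_RInt_gap_above M : 0 <= M <= 1 -> f 0 = 0 ->
  is_RInt (fun y => f (Rmax y M - M)) 0 1 (prim f (1 - M)).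
Proof.
  intros HM H0. eapply is_RInt_value; [eapply is_RInt_ChaslesR with (b := M) |].
  - eapply is_RInt_ext_open; [lra | | apply (is_RInt_constR 0 M 0)].
    intros x Hx. rewrite Rmax_right, Rminus_diag by lra. auto.
  - eapply is_RInt_ext_open; [lra | | apply (is_RInt_shift f Hf M 1 M)].
    intros x Hx. rewrite Rmax_left by lra. auto.
  - rewrite Rminus_diag, prim0. ring.
Qed.

Lemma is_RInt_min m : 0 <= m <= 1 ->
  is_RInt (fun y => f (Rmin y m)) 0 1 (prim f m + (1 - m) * f m).
Proof.
  intros Hm. eapply is_RInt_value; [eapply is_RInt_ChaslesR with (b := m) |].
  - eapply is_RInt_ext_open; [lra | | apply (is_RInt_prim f Hf 0 m)].
    intros x Hx. rewrite Rmin_left by lra. auto.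
  - eapply is_RInt_ext_open; [lra | | apply (is_RInt_constR m 1 (f m))].
    intros x Hx. rewrite Rmin_right by lra. auto.
  - rewrite prim0. ring.
Qed.

Lemma is_RInt_max M : 0 <= M <= 1 ->
  is_RInt (fun y => f (Rmax y M)) 0 1 (M * f M + prim f 1 - prim f M).
Proof.
  intros HM. eapply is_RInt_value; [eapply is_RInt_ChaslesR with (b := M) |].
  - eapply is_RInt_ext_open; [lra | | apply (is_RInt_constR 0 M (f M))].
    intros x Hx. rewrite Rmax_right by lra. auto.
  - eapply is_RInt_ext_open; [lra | | apply (is_RInt_prim f Hf M 1)].
    intros x Hx. rewrite Rmax_left by lra. auto.
  - ring.
Qed.

Lemma is_RInt_span m M : 0 <= m <= M -> M <= 1 ->
  is_RInt (fun y => f (Rmax y M - Rmin y m)) 0 1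
    (prim f M - 2 * prim f (M - m) + (M - m) * f (M - m) + prim f (1 - m)).
Proof.
  intros Hm HM.
  eapply is_RInt_value;
    [eapply is_RInt_ChaslesR with (b := m); [| eapply is_RInt_ChaslesR with (b := M)] |].
  - eapply is_RInt_ext_open; [lra | | apply (is_RInt_reflect f Hf 0 m M)].
    intros x Hx. rewrite Rmax_right, Rmin_left by lra. auto.
  - eapply is_RInt_ext_open; [lra | | apply (is_RInt_constR m M (f (M - m)))].
    intros x Hx. rewrite Rmax_right, Rmin_right by lra. auto.
  - eapply is_RInt_ext_open; [lra | | apply (is_RInt_shift f Hf M 1 m)].
    intros x Hx. rewrite Rmax_left, Rmin_right by lra. auto.
  - rewrite Rminus_0_r. ring.
Qed.

Lemma is_RInt_split_gap a b : 0 <= a <= b -> b <= 1 -> f 0 = 0 ->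
  is_RInt (fun y => split_gap f a b y) 0 1 (2 * prim f (b - a) - (b - a) * f (b - a)).
Proof.
  intros Hab Hb H0.
  eapply is_RInt_value;
    [eapply is_RInt_ChaslesR with (b := a); [| eapply is_RInt_ChaslesR with (b := b)] |].
  - eapply is_RInt_ext_open; [lra | | apply (is_RInt_constR 0 a 0)].
    intros x Hx. unfold split_gap, clamp. rewrite Rmax_right, Rmin_left, Rminus_diag, H0 by lra.
    ring.
  - eapply is_RInt_ext_open; [lra | | apply is_RInt_minusR;
      [apply is_RInt_plusR; [apply (is_RInt_shift f Hf a b a) | apply (is_RInt_reflect f Hf a b b)]
      | apply (is_RInt_constR a b (f (b - a)))]].
    intros x Hx. unfold split_gap, clamp. rewrite Rmax_left, Rmin_left by lra. auto.
  - eapply is_RInt_ext_open; [lra | | apply (is_RInt_constR b 1 0)].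
    intros x Hx. unfold split_gap, clamp. rewrite Rmax_left, Rmin_right, Rminus_diag, H0 by lra.
    ring.
  - rewrite !Rminus_diag, prim0. ring.
Qed.

Lemma is_RInt_sum_split_gap s : f 0 = 0 -> sortedR s -> (forall z, In z s -> 0 <= z <= 1) ->
  is_RInt (fun y => sum_pairs (fun a b => split_gap f a b y) s) 0 1
    (sum_pairs (fun a b => 2 * prim f (b - a) - (b - a) * f (b - a)) s).
Proof.
  intros H0. induction s as [|x [|y s] IH]; intros Hs Hin;
    [apply (is_RInt_value _ _ _ _ _ (is_RInt_constR 0 1 0)); simpl; ring .. |].
  destruct Hs as [Hxy Hs].
  apply (is_RInt_plusR (fun y0 => split_gap f x y y0)).
  - assert (Hx := Hin x (or_introl eq_refl)). assert (Hy := Hin y (or_intror (or_introl eq_refl))).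
    apply is_RInt_split_gap; auto; lra.
  - apply IH; auto. intros z Hz; apply Hin; right; auto.
Qed.

End Pieces.

Record weights := Weights { w_gap : R -> R; w_min : R -> R; w_max : R -> R; w_span : R -> R }.

Record admissible (s : weights) : Prop := {
  admissible_gap : continuity (w_gap s);
  admissible_min : continuity (w_min s);
  admissible_max : continuity (w_max s);
  admissible_span : continuity (w_span s);
  admissible_gap0 : w_gap s 0 = 0 }.

Definition W_sorted (s : weights) (L : list R) : R :=
  sum_pairs (fun a b => w_gap s (b - a)) L + w_min s (headR L) + w_max s (lastR L)
  + w_span s (lastR L - headR L).

Definition W (s : weights) (L : list R) : R := W_sorted s (sortR L).

(* Integrating W_s(L ++ [y]) over y in [0,1] yields W_{transform s}(L). *)
Definition transform (s : weights) : weights :=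
  let f := w_gap s in let al := w_min s in let be := w_max s in let ga := w_span s in
  Weights (fun g => f g + 2 * prim f g - g * f g)
          (fun x => prim f x + prim al x + (1 - x) * al x + prim ga (1 - x))
          (fun x => prim f (1 - x) + x * be x + prim be 1 - prim be x + prim ga x)
          (fun r => r * ga r - 2 * prim ga r).

Lemma admissible_transform s : admissible s -> admissible (transform s).
Proof.
  intros [H1 H2 H3 H4 H5].
  assert (P1 := continuity_prim _ H1). assert (P2 := continuity_prim _ H2).
  assert (P3 := continuity_prim _ H3). assert (P4 := continuity_prim _ H4).
  assert (Hid := continuity_identity). assert (Hom := continuity_one_minus).
  assert (Hc := continuity_constant).
  assert (Pom : forall g, continuity g -> continuity (fun x => g (1 - x)))
    by (intros g Hg; apply (continuity_comp (fun x => 1 - x) g); auto).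
  constructor; simpl.
  - apply continuity_minus; [apply continuity_plus; [| apply continuity_scal] |
      apply continuity_mult]; auto.
  - apply continuity_plus; [apply continuity_plus; [apply continuity_plus | apply continuity_mult] |
      apply Pom]; auto.
  - apply continuity_plus; [apply continuity_minus; [apply continuity_plus;
      [apply continuity_plus; [apply Pom | apply continuity_mult] |] |] |]; auto.
  - apply continuity_minus; [apply continuity_mult | apply continuity_scal]; auto.
  - rewrite H5, prim0. ring.
Qed.

Lemma admissible_iter n s : admissible s -> admissible (Nat.iter n transform s).
Proof. intros Hs. apply Nat.iter_invariant; auto. apply admissible_transform. Qed.

Lemma is_RInt_W_sorted_insertR s L : admissible s -> L <> nil -> sortedR L ->
  (forall z, In z L -> 0 <= z <= 1) ->
  is_RInt (fun y => W_sorted s (insertR y L)) 0 1 (W_sorted (transform s) L).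
Proof.
  intros Hs Hn HL Hin. destruct Hs as [H1 H2 H3 H4 H5].
  set (m := headR L). set (M := lastR L).
  assert (Hm : 0 <= m <= 1) by (apply Hin; destruct L; [congruence | left; auto]).
  assert (HM : 0 <= M <= 1) by (apply Hin, In_lastR; auto).
  assert (HmM : m <= M) by exact (proj1 (sortedR_bounds L HL M (In_lastR L Hn))).
  eapply is_RInt_ext_all.
  { intros y. symmetry. unfold W_sorted.
    rewrite sum_pairs_insertR, headR_insertR, lastR_insertR by auto. fold m M. reflexivity. }
  eapply is_RInt_value.
  { apply is_RInt_plusR; [apply is_RInt_plusR; [apply is_RInt_plusR |] |].
    - apply is_RInt_plusR; [apply is_RInt_plusR; [apply is_RInt_plusR |] |].
      + apply (is_RInt_constR 0 1 (sum_pairs (fun a b => w_gap s (b - a)) L)).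
      + apply is_RInt_sum_split_gap; auto.
      + apply is_RInt_gap_below; auto.
      + apply is_RInt_gap_above; auto.
    - apply is_RInt_min; auto.
    - apply is_RInt_max; auto.
    - apply is_RInt_span; auto; lra. }
  unfold W_sorted, transform; simpl. fold m M.
  rewrite (sum_pairs_ext_sorted
     (fun a b => w_gap s (b - a) + 2 * prim (w_gap s) (b - a) - (b - a) * w_gap s (b - a))
     (fun a b => w_gap s (b - a)
     + (2 * prim (w_gap s) (b - a) - (b - a) * w_gap s (b - a)))) by (auto; intros; ring).
  rewrite sum_pairs_plus. ring.
Qed.

Lemma IterInt_ext n F G v : (forall ys, length ys = n -> F ys = G ys) ->
  IterInt n F v -> IterInt n G v.
Proof.
  revert F G v. induction n as [|n IH]; intros F G v HFG H; simpl in *.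
  - rewrite H. apply HFG; auto.
  - destruct H as [g [Hg Hv]]. exists g. split; auto.
    intros t Ht. apply (IH (fun ys => F (t :: ys))); [| apply Hg; auto].
    intros ys Hl. apply HFG. simpl; auto.
Qed.

Lemma IterInt_unique n F v1 v2 : IterInt n F v1 -> IterInt n F v2 -> v1 = v2.
Proof.
  revert F v1 v2. induction n as [|n IH]; intros F v1 v2 H1 H2; simpl in *; [congruence |].
  destruct H1 as [g1 [Hg1 [pr1 <-]]]. destruct H2 as [g2 [Hg2 [pr2 <-]]].
  rewrite <- !RInt_Reals. apply (@RInt_ext R_CompleteNormedModule).
  intros x Hx. rewrite Rmin_left, Rmax_right in Hx by lra.
  apply (IH (fun ys => F (x :: ys))); [apply Hg1 | apply Hg2]; lra.
Qed.

(* The innermost integral is over the last point, so the points already fixed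
   form the prefix [pre]. *)
Lemma IterInt_W m : forall s pre, admissible s -> pre <> nil ->
  (forall z, In z pre -> 0 <= z <= 1) ->
  IterInt m (fun ys => W s (pre ++ ys)) (W (Nat.iter m transform s) pre).
Proof.
  induction m as [|m IH]; intros s pre Hs Hn Hin; simpl.
  - rewrite app_nil_r. auto.
  - exists (fun t => W (Nat.iter m transform s) (pre ++ t :: nil)). split.
    + intros t Ht. apply IterInt_ext with (fun ys => W s ((pre ++ t :: nil) ++ ys)).
      * intros ys _. rewrite <- app_assoc. auto.
      * apply IH; auto.
        -- destruct pre; simpl; congruence.
        -- intros z Hz. apply in_app_or in Hz as [Hz | [<- | []]]; auto.
    + apply is_RInt_Riemann. unfold W.
      eapply is_RInt_ext_all; [intros y; rewrite sortR_snoc; reflexivity |].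
      apply is_RInt_W_sorted_insertR; auto using admissible_iter, sortR_neq_nil, sortedR_sortR.
      intros z Hz. apply Hin, In_sortR; auto.
Qed.

(** * Evaluation of the iterated integral *)

Lemma INR_S_gt0 n : 0 < INR (S n).
Proof. apply lt_0_INR. lia. Qed.

Lemma INR_S_neq0 n : INR (S n) <> 0.
Proof. apply Rgt_not_eq, INR_S_gt0. Qed.

(* [auto_derive] writes INR (S n) in its unfolded form. *)
Ltac fold_INR_S n :=
  change (match n with 0%nat => 1 | S _ => INR n + 1 end) with (INR (S n)) in *.

(* Equations whose left side is an [RInt] are typed in Coquelicot's normed module
   over R; [ring] and [field] need them retyped as equations on R. *)
Ltac real_eq := match goal with |- ?A = ?B => change (@eq R A B) end.

Lemma RInt_pow01 n : RInt (fun x => x ^ n) 0 1 = / INR (S n).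
Proof.
  apply is_RInt_uniqueR. eapply is_RInt_value.
  - apply (is_RInt_derivable_pt_lim (fun x => x ^ S n / INR (S n))); [| apply continuity_power].
    intros x. apply is_derive_Reals. auto_derive; auto. fold_INR_S n. field; apply INR_S_neq0.
  - rewrite pow1. simpl. field; apply INR_S_neq0.
Qed.

Section ByParts.
Variable f : R -> R.
Hypothesis Hf : continuity f.

Lemma is_RInt_prim_by_parts (w dw : R -> R) (I : R) : (forall x, derivable_pt_lim w x (dw x)) -> continuity dw ->
  is_RInt (fun x => f x * w x) 0 1 I ->
  is_RInt (fun x => prim f x * dw x) 0 1 (prim f 1 * w 1 - I).
Proof.
  intros Hw Hdw HI.
  assert (Hcw : continuity w) by (intros x; apply derivable_continuous_pt; exists (dw x); apply Hw).
  assert (H : is_RInt (fun x => f x * w x + prim f x * dw x) 0 1 (prim f 1 * w 1 - prim f 0 * w 0)).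
  { apply (is_RInt_derivable_pt_lim (fun x => prim f x * w x)).
    - intros x. apply derivable_pt_lim_mult; [apply derivable_pt_lim_prim | apply Hw]; auto.
    - apply continuity_plus; apply continuity_mult; auto using continuity_prim. }
  rewrite prim0 in H. eapply is_RInt_value;
    [eapply is_RInt_ext_all; [| apply (is_RInt_minusR _ _ _ _ _ _ H HI)] |].
  - intros x. simpl. ring.
  - ring.
Qed.

Lemma is_RInt_prim_mul_one_minus_pow n :
  is_RInt (fun x => prim f x * (1 - x) ^ n) 0 1
    (RInt (fun x => f x * (1 - x) ^ S n) 0 1 / INR (S n)).
Proof.
  assert (HI : is_RInt (fun x => f x * (- (1 - x) ^ S n / INR (S n))) 0 1
     (- / INR (S n) * RInt (fun x => f x * (1 - x) ^ S n) 0 1)).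
  { eapply is_RInt_ext_all; [| apply is_RInt_scalR, is_RInt_RInt, continuity_mult;
      auto using continuity_one_minus_power].
    intros x; simpl. field; apply INR_S_neq0. }
  eapply is_RInt_value; [eapply (is_RInt_prim_by_parts (fun x => - (1 - x) ^ S n / INR (S n)));
    [| apply continuity_one_minus_power | exact HI] |].
  - intros x. apply is_derive_Reals. auto_derive; auto. fold_INR_S n.
    replace (1 + - x) with (1 - x) by ring. field; apply INR_S_neq0.
  - simpl. field; apply INR_S_neq0.
Qed.

Lemma is_RInt_prim_tail_mul_pow n :
  is_RInt (fun x => (prim f 1 - prim f x) * x ^ n) 0 1
    (RInt (fun x => f x * x ^ S n) 0 1 / INR (S n)).
Proof.
  assert (HI : is_RInt (fun x => f x * (x ^ S n / INR (S n))) 0 1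
     (/ INR (S n) * RInt (fun x => f x * x ^ S n) 0 1)).
  { eapply is_RInt_ext_all; [| apply is_RInt_scalR, is_RInt_RInt, continuity_mult;
      auto using continuity_power].
    intros x; simpl. field; apply INR_S_neq0. }
  assert (Hd : forall x, derivable_pt_lim (fun x => x ^ S n / INR (S n)) x (x ^ n)).
  { intros x. apply is_derive_Reals. auto_derive; auto. fold_INR_S n. field; apply INR_S_neq0. }
  assert (H2 := is_RInt_prim_by_parts _ _ _ Hd (continuity_power n) HI).
  assert (H3 := is_RInt_scalR _ 0 1 (prim f 1) _ (is_RInt_RInt _ 0 1 (continuity_power n))).
  eapply is_RInt_value; [eapply is_RInt_ext_all; [| apply (is_RInt_minusR _ _ _ _ _ _ H3 H2)] |].
  - intros x. simpl. ring.
  - rewrite RInt_pow01. simpl. fold_INR_S n. rewrite pow1. field; apply INR_S_neq0.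
Qed.

Lemma is_RInt_prim_mul_span_weight j :
  is_RInt (fun r => prim f r * (r ^ S j - INR (S j) * r ^ j * (1 - r))) 0 1
    (RInt (fun r => f r * (r ^ S j * (1 - r))) 0 1).
Proof.
  assert (Hw : forall x, derivable_pt_lim (fun r => r ^ S j * (1 - r)) x
                 (INR (S j) * x ^ j * (1 - x) - x ^ S j)).
  { intros x. apply is_derive_Reals. auto_derive; auto. fold_INR_S j. simpl. ring. }
  assert (Hc : continuity (fun x => INR (S j) * x ^ j * (1 - x) - x ^ S j)).
  { apply continuity_minus; [apply continuity_mult; [apply continuity_scal |] |];
      auto using continuity_power, continuity_one_minus. }
  assert (H := is_RInt_prim_by_parts _ _ _ Hw Hc
    (is_RInt_RInt (fun r => f r * (r ^ S j * (1 - r))) 0 1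
    (continuity_mult _ _ Hf (continuity_mult _ _ (continuity_power (S j)) continuity_one_minus)))).
  apply (is_RInt_scalR _ _ _ (-1)) in H.
  eapply is_RInt_value; [eapply is_RInt_ext_all; [| exact H] |].
  - intros x. simpl. ring.
  - simpl. ring.
Qed.

End ByParts.

(* Lambda j s is the expectation of W_s over n = j + 2 independent uniform points:
   the polynomial weights are the densities of the minimum, the maximum, the span
   and (n - 1 times) a gap of such a sample. *)
Definition Lambda (j : nat) (s : weights) : R :=
  INR (S (S j)) * INR (S j) * RInt (fun g => w_gap s g * (1 - g) ^ S j) 0 1
  + INR (S (S j)) * RInt (fun x => w_min s x * (1 - x) ^ S j) 0 1
  + INR (S (S j)) * RInt (fun x => w_max s x * x ^ S j) 0 1
  + INR (S (S j)) * INR (S j) * RInt (fun r => w_span s r * (r ^ j * (1 - r))) 0 1.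

Section LambdaTransform.
Variable s : weights.
Hypothesis Hs : admissible s.
Variable j : nat.

Let J1 : R := RInt (fun r => prim (w_span s) r * (r ^ j * (1 - r))) 0 1.
Let J2 : R := RInt (fun u => prim (w_span s) u * u ^ S j) 0 1.

Lemma RInt_span_by_parts :
  J2 - INR (S j) * J1 = RInt (fun r => w_span s r * (r ^ S j * (1 - r))) 0 1.
Proof.
  destruct Hs as [_ _ _ H4 _].
  assert (C := continuity_prim _ H4).
  rewrite <- (is_RInt_uniqueR _ _ _ _ (is_RInt_prim_mul_span_weight _ H4 j)).
  symmetry. apply is_RInt_uniqueR.
  eapply is_RInt_ext_all; [| apply is_RInt_minusR; [| apply is_RInt_scalR];
    apply is_RInt_RInt, continuity_mult; auto].
  - intros x. simpl. ring.
  - apply continuity_power.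
  - apply continuity_mult; auto using continuity_power, continuity_one_minus.
Qed.

Lemma RInt_transform_gap :
  RInt (fun g => w_gap (transform s) g * (1 - g) ^ S j) 0 1 =
  RInt (fun g => w_gap s g * (1 - g) ^ S (S j)) 0 1
  + 2 * (RInt (fun g => w_gap s g * (1 - g) ^ S (S j)) 0 1 / INR (S (S j))).
Proof.
  destruct Hs as [H1 _ _ _ _]. apply is_RInt_uniqueR.
  eapply is_RInt_ext_all; [| apply is_RInt_plusR;
    [apply is_RInt_RInt | apply is_RInt_scalR, is_RInt_prim_mul_one_minus_pow; auto]].
  - intros x. simpl. ring.
  - apply continuity_mult; auto using continuity_one_minus_power.
Qed.

Lemma RInt_transform_min :
  RInt (fun x => w_min (transform s) x * (1 - x) ^ S j) 0 1 =
  RInt (fun g => w_gap s g * (1 - g) ^ S (S j)) 0 1 / INR (S (S j))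
  + RInt (fun x => w_min s x * (1 - x) ^ S (S j)) 0 1 / INR (S (S j))
  + RInt (fun x => w_min s x * (1 - x) ^ S (S j)) 0 1 + J2.
Proof.
  destruct Hs as [H1 H2 _ H4 _]. apply is_RInt_uniqueR.
  eapply is_RInt_ext_all.
  2:{ apply is_RInt_plusR; [apply is_RInt_plusR; [apply is_RInt_plusR |] |].
      - apply is_RInt_prim_mul_one_minus_pow; auto.
      - apply is_RInt_prim_mul_one_minus_pow; auto.
      - apply is_RInt_RInt, continuity_mult; auto using continuity_one_minus_power.
      - apply is_RInt_reflect01, is_RInt_RInt, continuity_mult;
          auto using continuity_prim, continuity_power. }
  intros x. simpl. ring.
Qed.

Lemma RInt_transform_max :
  RInt (fun x => w_max (transform s) x * x ^ S j) 0 1 =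
  RInt (fun g => w_gap s g * (1 - g) ^ S (S j)) 0 1 / INR (S (S j))
  + RInt (fun x => w_max s x * x ^ S (S j)) 0 1
  + RInt (fun x => w_max s x * x ^ S (S j)) 0 1 / INR (S (S j)) + J2.
Proof.
  destruct Hs as [H1 _ H3 H4 _]. apply is_RInt_uniqueR.
  eapply is_RInt_ext_all.
  2:{ apply is_RInt_plusR; [apply is_RInt_plusR; [apply is_RInt_plusR |] |].
      - apply is_RInt_reflect01, is_RInt_prim_mul_one_minus_pow; auto.
      - apply is_RInt_RInt, continuity_mult; auto using continuity_power.
      - apply is_RInt_prim_tail_mul_pow; auto.
      - apply is_RInt_RInt, continuity_mult; auto using continuity_prim, continuity_power. }
  intros x. simpl. replace (1 - (1 - x)) with x by ring. ring.
Qed.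

Lemma RInt_transform_span :
  RInt (fun r => w_span (transform s) r * (r ^ j * (1 - r))) 0 1 =
  RInt (fun r => w_span s r * (r ^ S j * (1 - r))) 0 1 - 2 * J1.
Proof.
  destruct Hs as [_ _ _ H4 _]. apply is_RInt_uniqueR.
  assert (Cw : forall k, continuity (fun r => r ^ k * (1 - r)))
    by (intros k; apply continuity_mult; auto using continuity_power, continuity_one_minus).
  eapply is_RInt_ext_all.
  2:{ apply is_RInt_minusR; [| apply is_RInt_scalR]; apply is_RInt_RInt, continuity_mult;
        auto using continuity_prim. }
  intros x. simpl. ring.
Qed.

Lemma Lambda_transform : Lambda j (transform s) = Lambda (S j) s.
Proof.
  unfold Lambda.
  rewrite RInt_transform_gap, RInt_transform_min, RInt_transform_max, RInt_transform_span.
  rewrite <- RInt_span_by_parts.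
  assert (K := INR_S_gt0 j). assert (K2 := INR_S_gt0 (S j)).
  rewrite (S_INR (S (S j))), (S_INR (S j)) in *. field. lra.
Qed.

End LambdaTransform.

Lemma Lambda_iter j n s : admissible s -> Lambda j (Nat.iter n transform s) = Lambda (j + n) s.
Proof.
  revert j. induction n as [|n IH]; intros j Hs; simpl.
  - rewrite Nat.add_0_r. auto.
  - rewrite Lambda_transform by (apply admissible_iter; auto). rewrite IH by auto.
    f_equal. lia.
Qed.

Lemma is_RInt_W_transform_singleton s : admissible s ->
  is_RInt (fun t => W_sorted (transform s) (t :: nil)) 0 1 (Lambda 0 s).
Proof.
  intros [H1 H2 H3 H4 H5].
  set (f := w_gap s) in *. set (al := w_min s) in *. set (be := w_max s) in *.
  set (ga := w_span s) in *.
  eapply is_RInt_value.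
  { eapply is_RInt_ext_all.
    2:{ apply is_RInt_plusR; [apply is_RInt_plusR; [apply is_RInt_plusR; [apply is_RInt_plusR;
          [apply is_RInt_plusR; [apply is_RInt_plusR; [apply is_RInt_plusR |] |] |] |] |] |].
        - apply (is_RInt_prim_mul_one_minus_pow f H1 0).
        - apply (is_RInt_prim_mul_one_minus_pow al H2 0).
        - apply (is_RInt_RInt (fun x => al x * (1 - x) ^ 1)), continuity_mult;
            auto using continuity_one_minus_power.
        - apply (is_RInt_reflect01 (fun x => prim ga x * (1 - x) ^ 0)).
          apply (is_RInt_prim_mul_one_minus_pow ga H4 0).
        - apply (is_RInt_reflect01 (fun x => prim f x * (1 - x) ^ 0)).
          apply (is_RInt_prim_mul_one_minus_pow f H1 0).
        - apply (is_RInt_RInt (fun x => be x * x ^ 1)), continuity_mult;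
            auto using continuity_power.
        - apply (is_RInt_prim_tail_mul_pow be H3 0).
        - apply (is_RInt_prim_mul_one_minus_pow ga H4 0). }
    intros t. unfold W_sorted, headR, lastR; simpl. fold f al be ga.
    rewrite Rminus_diag, prim0. replace (1 - (1 - t)) with t by ring. ring. }
  unfold Lambda. fold f al be ga.
  rewrite (RInt_ext01 (fun r => ga r * (r ^ 0 * (1 - r))) (fun x => ga x * (1 - x) ^ 1))
    by (intros; simpl; ring).
  simpl. field.
Qed.

Definition tour_weights (p : R) : weights :=
  Weights (fun x => rpow x p) (fun _ => 0) (fun _ => 0) (fun x => rpow x p).

Lemma admissible_tour_weights p : 0 < p -> admissible (tour_weights p).
Proof.
  intros Hp. constructor; simpl; auto using continuity_constant.
  - intros x. apply continuous_rpow; auto.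
  - intros x. apply continuous_rpow; auto.
  - apply rpow_nonpos; lra.
Qed.

Lemma W_tour_weights p xs : xs <> nil -> W (tour_weights p) xs = sorted_tour_cost p xs.
Proof.
  intros Hn. unfold W, sorted_tour_cost, W_sorted.
  rewrite pts_cycle_cost_sorted by (auto using sortR_neq_nil, sortedR_sortR).
  simpl. ring.
Qed.

Lemma IterInt_E_N_Lambda p m : 0 < p < 1 ->
  IterInt (S (S m)) (E_N (S (S m)) p) (Lambda m (tour_weights p)).
Proof.
  intros Hp. assert (Hadm := admissible_tour_weights p ltac:(lra)).
  apply IterInt_ext with (W (tour_weights p)).
  - intros ys Hl. rewrite E_N_sorted by auto. apply W_tour_weights.
    destruct ys; simpl in Hl; congruence.
  - exists (fun t => W (Nat.iter (S m) transform (tour_weights p)) (t :: nil)). split.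
    + intros t Ht. apply (IterInt_W (S m) _ (t :: nil)); auto; [congruence |].
      intros z [<- | []]; auto.
    + apply is_RInt_Riemann. rewrite <- (Nat.add_0_l m), <- Lambda_iter by auto.
      apply is_RInt_W_transform_singleton, admissible_iter; auto.
Qed.

(** * The Gamma function *)

Lemma gamma_integrand_rpow s t : gamma_integrand s t = rpow t (s - 1) * exp (- t).
Proof. unfold gamma_integrand, rpow. destruct (Rle_dec t 0); auto. ring. Qed.

Lemma gamma_integrand_exp s t : 0 < t -> gamma_integrand s t = exp ((s - 1) * ln t - t).
Proof.
  intros Ht. rewrite gamma_integrand_rpow, rpow_Rpower by auto.
  unfold Rpower. rewrite <- exp_plus. f_equal; ring.
Qed.

Lemma gamma_integrand_ge0 s t : 0 <= gamma_integrand s t.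
Proof. rewrite gamma_integrand_rpow. apply Rmult_le_pos; [apply rpow_ge0 | left; apply exp_pos]. Qed.

Lemma derivable_pt_lim_exp_opp x : derivable_pt_lim (fun t => exp (- t)) x (- exp (- x)).
Proof.
  replace (- exp (- x)) with (exp (- x) * - (1)) by ring.
  apply (derivable_pt_lim_comp (fun t => - t) exp).
  - apply derivable_pt_lim_opp, derivable_pt_lim_id.
  - apply derivable_pt_lim_exp.
Qed.

Lemma continuity_exp_opp : continuity (fun t => exp (- t)).
Proof.
  intros x. apply derivable_continuous_pt. eexists. apply derivable_pt_lim_exp_opp.
Qed.

Lemma continuity_rpow a : 0 < a -> continuity (fun t => rpow t a).
Proof. intros Ha x. apply continuous_rpow; auto. Qed.

Lemma continuity_gamma_integrand s : 1 < s -> continuity (gamma_integrand s).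
Proof.
  intros Hs x. apply (continuity_pt_ext (fun t => rpow t (s - 1) * exp (- t))).
  - intros; rewrite gamma_integrand_rpow; auto.
  - apply continuity_mult; [apply continuity_rpow; lra | apply continuity_exp_opp].
Qed.

Definition Gamma_trunc (s b : R) : R := RInt (gamma_integrand s) 0 b.

Lemma is_RInt_Gamma_trunc s b : 1 < s -> is_RInt (gamma_integrand s) 0 b (Gamma_trunc s b).
Proof. intros Hs. apply is_RInt_RInt, continuity_gamma_integrand; auto. Qed.

Lemma Gamma_trunc_le_compat s b1 b2 : 1 < s -> 0 <= b1 <= b2 -> Gamma_trunc s b1 <= Gamma_trunc s b2.
Proof.
  intros Hs Hb. assert (H := is_RInt_prim _ (continuity_gamma_integrand s Hs) b1 b2).
  assert (0 <= prim (gamma_integrand s) b2 - prim (gamma_integrand s) b1).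
  { apply (is_RInt_ge_0 _ b1 b2 _ ltac:(lra) H). intros; apply gamma_integrand_ge0. }
  unfold Gamma_trunc. unfold prim in *. lra.
Qed.

Lemma exp_le_compat x y : x <= y -> exp x <= exp y.
Proof. intros [H | ->]; [left; apply exp_increasing; auto | lra]. Qed.

Lemma Rpower_le_exp_half t a : 0 < t -> 0 < a -> Rpower t a <= Rpower (2 * a) a * exp (t / 2).
Proof.
  intros Ht Ha. unfold Rpower. rewrite <- exp_plus.
  apply exp_le_compat.
  assert (H := exp_ineq1_le (ln (t * / (2 * a)))).
  rewrite exp_ln in H by (apply Rmult_lt_0_compat; [lra | apply Rinv_0_lt_compat; lra]).
  rewrite ln_mult, ln_Rinv in H by (try apply Rinv_0_lt_compat; lra).
  assert (E : t * / (2 * a) * a = t / 2) by (field; lra).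
  assert (a * (ln t - ln (2 * a)) <= a * (t * / (2 * a) - 1)) by (apply Rmult_le_compat_l; lra).
  nra.
Qed.

(* A crude bound t^a <= K e^(t/2), enough for integrability and for t^a e^(-t) -> 0. *)
Definition exp_half_const (a : R) : R := Rpower (2 * a) a.

Lemma gamma_integrand_le s t : 1 < s ->
  gamma_integrand s t <= exp_half_const (s - 1) * exp (- t / 2).
Proof.
  intros Hs. rewrite gamma_integrand_rpow. unfold rpow. destruct (Rle_dec t 0).
  - rewrite Rmult_0_l. apply Rmult_le_pos; left; [apply Rpower_gt0 | apply exp_pos].
  - assert (H := Rpower_le_exp_half t (s - 1) ltac:(lra) ltac:(lra)).
    replace (- t / 2) with (t / 2 + - t) by field. rewrite exp_plus.
    assert (0 < exp (- t)) by apply exp_pos. unfold exp_half_const. nra.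
Qed.

Lemma is_RInt_exp_half b : is_RInt (fun t => exp (- t / 2)) 0 b (2 - 2 * exp (- b / 2)).
Proof.
  eapply is_RInt_value.
  - apply (is_RInt_derivable_pt_lim (fun t => - 2 * exp (- t / 2))).
    + intros x. apply is_derive_Reals. auto_derive; auto. unfold Rdiv. field.
    + intros x. apply (continuity_pt_comp (fun t => - t / 2) exp).
      * apply (continuity_pt_ext (fun t => -1 / 2 * t)); [intros; field |].
        apply continuity_scal, continuity_identity.
      * apply derivable_continuous_pt, derivable_pt_exp.
  - replace (- 0 / 2) with 0 by field. rewrite exp_0. ring.
Qed.

Lemma Gamma_trunc_bounded s b : 1 < s -> 0 <= b -> Gamma_trunc s b <= 2 * exp_half_const (s - 1).
Proof.
  intros Hs Hb.
  assert (H := is_RInt_scalR _ 0 b (exp_half_const (s - 1)) _ (is_RInt_exp_half b)).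
  assert (Gamma_trunc s b <= exp_half_const (s - 1) * (2 - 2 * exp (- b / 2))).
  { apply (is_RInt_le _ _ 0 b _ _ Hb (is_RInt_Gamma_trunc s b Hs) H).
    intros; apply gamma_integrand_le; auto. }
  assert (0 < exp (- b / 2)) by apply exp_pos.
  assert (0 < exp_half_const (s - 1)) by apply Rpower_gt0. nra.
Qed.

Definition cv_at_infinity (F : R -> R) (L : R) : Prop :=
  forall eps, 0 < eps -> exists B, forall b, B <= b -> Rabs (F b - L) < eps.

(* Monotone and bounded, so the truncated integrals converge to their supremum. *)
Lemma Gamma_trunc_cv s : 1 < s -> exists L,
  (forall b, 0 <= b -> Gamma_trunc s b <= L) /\ cv_at_infinity (Gamma_trunc s) L.
Proof.
  intros Hs. set (E := fun y => exists b, 0 <= b /\ y = Gamma_trunc s b).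
  assert (HE1 : bound E).
  { exists (2 * exp_half_const (s - 1)). intros y [b [Hb ->]]. apply Gamma_trunc_bounded; auto. }
  assert (HE2 : exists y, E y) by (exists (Gamma_trunc s 0), 0; split; [lra | auto]).
  destruct (completeness E HE1 HE2) as [L [HL1 HL2]].
  exists L. split; [intros b Hb; apply HL1; exists b; auto |].
  intros eps He.
  destruct (Classical_Prop.classic (exists b, 0 <= b /\ L - eps < Gamma_trunc s b))
    as [[b0 [Hb0 Hb0']] | Hn].
  - exists b0. intros b Hb.
    assert (Gamma_trunc s b0 <= Gamma_trunc s b) by (apply Gamma_trunc_le_compat; auto; lra).
    assert (Gamma_trunc s b <= L) by (apply HL1; exists b; split; auto; lra).
    rewrite Rabs_left1 by lra. lra.
  - exfalso. assert (L <= L - eps); [| lra]. apply HL2. intros y [b [Hb ->]].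
    destruct (Rle_dec (Gamma_trunc s b) (L - eps)); auto.
    exfalso. apply Hn. exists b. split; auto; lra.
Qed.

Lemma is_Gamma_cv s g : 1 < s -> cv_at_infinity (Gamma_trunc s) g -> is_Gamma s g.
Proof.
  intros Hs H. split.
  - intros b Hb.
    exists (ex_RInt_Reals_0 _ _ _ (ex_intro _ _ (is_RInt_Gamma_trunc s b Hs))). auto.
  - intros eps He. destruct (H eps He) as [B HB]. exists B. intros b Hb pr.
    rewrite <- RInt_Reals. apply HB; auto.
Qed.

Lemma is_Gamma_unique s g1 g2 : is_Gamma s g1 -> is_Gamma s g2 -> g1 = g2.
Proof.
  intros [H1 H2] [_ H3]. destruct (Req_dec g1 g2) as [E | E]; auto. exfalso.
  set (eps := Rabs (g1 - g2) / 2).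
  assert (He : 0 < eps) by (assert (0 < Rabs (g1 - g2)) by (apply Rabs_pos_lt; lra);
    unfold eps; lra).
  destruct (H2 eps He) as [B1 HB1]. destruct (H3 eps He) as [B2 HB2].
  set (b := Rmax 0 (Rmax B1 B2)).
  destruct (H1 b (Rmax_l _ _)) as [pr _].
  assert (A1 := HB1 b ltac:(unfold b; eapply Rle_trans; [apply Rmax_l | apply Rmax_r]) pr).
  assert (A2 := HB2 b ltac:(unfold b; eapply Rle_trans; [apply Rmax_r | apply Rmax_r]) pr).
  assert (Rabs (g1 - g2) <= Rabs (RiemannInt pr - g2) + Rabs (RiemannInt pr - g1)).
  { replace (g1 - g2) with ((RiemannInt pr - g2) - (RiemannInt pr - g1)) by ring.
    eapply Rle_trans; [apply Rabs_triang | rewrite Rabs_Ropp; lra]. }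
  unfold eps in *. lra.
Qed.

Lemma Gamma_cv s g : 1 < s -> cv_at_infinity (Gamma_trunc s) g -> Gamma s = g.
Proof.
  intros Hs H. assert (Hg := is_Gamma_cv s g Hs H). unfold Gamma.
  destruct (constructive_indefinite_description _ _) as [x [Hx | Hx]]; simpl.
  - apply (is_Gamma_unique s); auto.
  - exfalso; apply Hx; exists g; auto.
Qed.

Lemma Gamma_trunc_cv_Gamma s : 1 < s -> cv_at_infinity (Gamma_trunc s) (Gamma s).
Proof.
  intros Hs. destruct (Gamma_trunc_cv s Hs) as [L [_ HL]]. rewrite (Gamma_cv s L Hs HL). auto.
Qed.

Lemma Gamma_trunc_le_Gamma s b : 1 < s -> 0 <= b -> Gamma_trunc s b <= Gamma s.
Proof.
  intros Hs Hb. destruct (Gamma_trunc_cv s Hs) as [L [HL1 HL]].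
  rewrite (Gamma_cv s L Hs HL). auto.
Qed.

Lemma Gamma_le_of_trunc_le s K : 1 < s -> (forall b, 0 <= b -> Gamma_trunc s b <= K) ->
  Gamma s <= K.
Proof.
  intros Hs H. destruct (Rle_dec (Gamma s) K) as [| Hn]; auto. exfalso.
  destruct (Gamma_trunc_cv_Gamma s Hs (Gamma s - K) ltac:(lra)) as [B HB].
  specialize (HB (Rmax 0 B) (Rmax_r _ _)). specialize (H (Rmax 0 B) (Rmax_l _ _)).
  apply Rabs_def2 in HB. lra.
Qed.

Lemma Gamma_gt0 s : 1 < s -> 0 < Gamma s.
Proof.
  intros Hs. eapply Rlt_le_trans; [| apply (Gamma_trunc_le_Gamma s 1 Hs ltac:(lra))].
  apply RInt_gt_0; [lra | |].
  - intros x Hx. rewrite gamma_integrand_rpow, rpow_Rpower by lra.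
    apply Rmult_lt_0_compat; [apply Rpower_gt0 | apply exp_pos].
  - intros x _. apply continuity_continuous, continuity_gamma_integrand; auto.
Qed.

Lemma rpow_mul_exp_opp_cv a : 0 < a -> cv_at_infinity (fun b => rpow b a * exp (- b)) 0.
Proof.
  intros Ha eps He. set (K := exp_half_const a). assert (HK : 0 < K) by apply Rpower_gt0.
  exists (Rmax 1 (-2 * ln (eps / K) + 1)). intros b Hb.
  assert (H1 := Rmax_l 1 (-2 * ln (eps / K) + 1)).
  assert (H2 := Rmax_r 1 (-2 * ln (eps / K) + 1)).
  rewrite Rminus_0_r, rpow_Rpower by lra.
  assert (Hb1 := Rpower_le_exp_half b a ltac:(lra) Ha). fold (exp_half_const a) K in Hb1.
  assert (E : exp (- b / 2) < eps / K).
  { rewrite <- (exp_ln (eps / K)) by (apply Rdiv_lt_0_compat; auto). apply exp_increasing. lra. }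
  assert (E2 : exp (b / 2) * exp (- b) = exp (- b / 2)) by (rewrite <- exp_plus; f_equal; field).
  assert (0 < exp (- b)) by apply exp_pos.
  assert (0 < Rpower b a * exp (- b)) by (apply Rmult_lt_0_compat; auto using Rpower_gt0).
  rewrite Rabs_right by lra.
  apply Rle_lt_trans with (K * exp (- b / 2)).
  - rewrite <- E2, <- Rmult_assoc. apply Rmult_le_compat_r; lra.
  - apply Rmult_lt_reg_l with (/ K); [apply Rinv_0_lt_compat; auto |].
    rewrite <- Rmult_assoc, Rinv_l by lra. unfold Rdiv in E. lra.
Qed.

Lemma Gamma_trunc_succ s b : 1 < s -> 0 <= b ->
  Gamma_trunc (s + 1) b = s * Gamma_trunc s b - rpow b s * exp (- b).
Proof.
  intros Hs Hb.
  set (df := fun x => rpow x s * exp (- x) - s * (rpow x (s - 1) * exp (- x))).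
  assert (Hd : forall x, derivable_pt_lim (fun t => - (rpow t s * exp (- t))) x (df x)).
  { intros x. unfold df.
    replace (rpow x s * exp (- x) - s * (rpow x (s - 1) * exp (- x))) with
      (- ((s * rpow x (s - 1)) * exp (- x) + rpow x s * (- exp (- x)))) by ring.
    apply (derivable_pt_lim_opp (fun t => rpow t s * exp (- t))).
    apply (derivable_pt_lim_mult (fun t => rpow t s) (fun t => exp (- t))).
    - apply is_derive_Reals, is_derive_rpow; auto.
    - apply derivable_pt_lim_exp_opp. }
  assert (Hc : continuity df).
  { unfold df. apply continuity_minus; [| apply continuity_scal];
      apply continuity_mult; auto using continuity_exp_opp; apply continuity_rpow; lra. }
  assert (H := is_RInt_plusR _ _ _ _ _ _ (is_RInt_derivable_pt_lim _ _ 0 b Hd Hc)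
    (is_RInt_scalR _ _ _ s _ (is_RInt_Gamma_trunc s b Hs))).
  apply is_RInt_uniqueR. eapply is_RInt_ext_all; [| eapply is_RInt_value; [exact H |]].
  - intros x. unfold df. rewrite !gamma_integrand_rpow. replace (s + 1 - 1) with s by ring. ring.
  - unfold minus, plus, opp; simpl. rewrite (rpow_nonpos 0) by lra. ring.
Qed.

Lemma Gamma_succ s : 1 < s -> Gamma (s + 1) = s * Gamma s.
Proof.
  intros Hs. apply Gamma_cv; [lra |]. intros eps He.
  destruct (Gamma_trunc_cv_Gamma s Hs (eps / (2 * s)) ltac:(apply Rdiv_lt_0_compat; lra))
    as [B1 HB1].
  destruct (rpow_mul_exp_opp_cv s ltac:(lra) (eps / 2) ltac:(lra)) as [B2 HB2].
  exists (Rmax B2 (Rmax B1 0)). intros b Hb.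
  assert (Hb2 : B2 <= b) by (eapply Rle_trans; [apply Rmax_l | apply Hb]).
  assert (Hb1 : B1 <= b)
    by (eapply Rle_trans; [| apply Hb]; eapply Rle_trans; [apply Rmax_l | apply Rmax_r]).
  assert (Hb0 : 0 <= b)
    by (eapply Rle_trans; [| apply Hb]; eapply Rle_trans; [apply Rmax_r | apply Rmax_r]).
  rewrite Gamma_trunc_succ by auto. specialize (HB1 b Hb1). specialize (HB2 b Hb2).
  rewrite Rminus_0_r in HB2. apply Rabs_def2 in HB1. apply Rabs_def2 in HB2.
  assert (Hs2 : s * (eps / (2 * s)) = eps / 2) by (field; lra).
  assert (s * (Gamma_trunc s b - Gamma s) < s * (eps / (2 * s))) by (apply Rmult_lt_compat_l; lra).
  assert (s * (- (eps / (2 * s))) < s * (Gamma_trunc s b - Gamma s))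
    by (apply Rmult_lt_compat_l; lra).
  apply Rabs_def1; nra.
Qed.

Lemma Gamma_trunc_two b : 0 <= b -> Gamma_trunc 2 b = 1 - (b + 1) * exp (- b).
Proof.
  intros Hb. apply is_RInt_uniqueR. eapply is_RInt_ext_open; [exact Hb | |].
  2:{ eapply is_RInt_value.
      - apply (is_RInt_derivable_pt_lim (fun t => - ((t + 1) * exp (- t))) (fun t => t * exp (- t))).
        + intros x. apply is_derive_Reals. auto_derive; auto. ring.
        + apply continuity_mult; [apply continuity_identity | apply continuity_exp_opp].
      - rewrite Ropp_0, exp_0. ring. }
  intros x Hx. simpl. rewrite gamma_integrand_rpow. replace (2 - 1) with 1 by ring.
  rewrite rpow_Rpower, Rpower_1 by lra. auto.
Qed.

Lemma Gamma_two : Gamma 2 = 1.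
Proof.
  apply Gamma_cv; [lra |]. intros eps He.
  destruct (rpow_mul_exp_opp_cv 1 ltac:(lra) (eps / 2) ltac:(lra)) as [B HB].
  exists (Rmax 1 B). intros b Hb. assert (H1 := Rmax_l 1 B). assert (H2 := Rmax_r 1 B).
  rewrite Gamma_trunc_two by lra. specialize (HB b ltac:(lra)).
  rewrite Rminus_0_r, rpow_Rpower, Rpower_1 in HB by lra.
  assert (0 < exp (- b)) by apply exp_pos.
  rewrite Rabs_right in HB by nra. rewrite Rabs_left1; nra.
Qed.

Lemma Gamma_INR_fact n : (1 <= n)%nat -> Gamma (INR n + 1) = INR (fact n).
Proof.
  induction n as [|n IH]; intros Hn; [lia |].
  destruct n as [|n].
  - simpl. replace (1 + 1) with 2 by ring. apply Gamma_two.
  - rewrite S_INR, Gamma_succ by (assert (0 < INR (S n)) by apply INR_S_gt0; lra).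
    rewrite IH by lia. rewrite (fact_simpl (S n)), mult_INR, (S_INR (S n)). ring.
Qed.

Lemma exp_convex t a b : 0 <= t <= 1 ->
  exp (t * a + (1 - t) * b) <= t * exp a + (1 - t) * exp b.
Proof.
  intros Ht. set (m := t * a + (1 - t) * b).
  assert (Tan : forall x, exp m * (1 + (x - m)) <= exp x).
  { intros x. replace (exp x) with (exp m * exp (x - m)) by (rewrite <- exp_plus; f_equal; ring).
    apply Rmult_le_compat_l; [left; apply exp_pos | apply exp_ineq1_le]. }
  assert (Ta := Tan a). assert (Tb := Tan b).
  assert (E : t * (exp m * (1 + (a - m))) + (1 - t) * (exp m * (1 + (b - m))) = exp m)
    by (unfold m; ring).
  nra.
Qed.

(* Young's inequality a^th b^(1-th) <= th a + (1-th) b, applied to the normalised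
   integrands; integrating it gives Hoelder's inequality for Gamma. *)
Lemma gamma_integrand_interpolate th s1 s2 G1 G2 t : 0 < th < 1 -> 0 < G1 -> 0 < G2 ->
  gamma_integrand (th * s1 + (1 - th) * s2) t <=
  Rpower G1 th * Rpower G2 (1 - th) *
    (th / G1 * gamma_integrand s1 t + (1 - th) / G2 * gamma_integrand s2 t).
Proof.
  intros Ht P1 P2. destruct (Rle_dec t 0) as [Ht0 | Ht0].
  - unfold gamma_integrand. destruct (Rle_dec t 0); [| contradiction].
    assert (0 < Rpower G1 th * Rpower G2 (1 - th)) by (apply Rmult_lt_0_compat; apply Rpower_gt0).
    lra.
  - rewrite !gamma_integrand_exp by lra.
    set (u1 := (s1 - 1) * ln t - t - ln G1). set (u2 := (s2 - 1) * ln t - t - ln G2).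
    assert (C := exp_convex th u1 u2 ltac:(lra)).
    assert (E1 : exp ((th * s1 + (1 - th) * s2 - 1) * ln t - t) =
                 Rpower G1 th * Rpower G2 (1 - th) * exp (th * u1 + (1 - th) * u2)).
    { unfold Rpower. rewrite <- !exp_plus. f_equal. unfold u1, u2. ring. }
    assert (E2 : forall v G, 0 < G -> exp (v - ln G) = / G * exp v)
      by (intros v G HG; unfold Rminus; rewrite exp_plus, exp_Ropp, exp_ln by auto; ring).
    rewrite E1. apply Rmult_le_compat_l; [left; apply Rmult_lt_0_compat; apply Rpower_gt0 |].
    unfold u1, u2 in *. rewrite !E2 in C by auto. unfold Rdiv. lra.
Qed.

Lemma Gamma_log_convex th s1 s2 : 0 < th < 1 -> 1 < s1 -> 1 < s2 ->
  Gamma (th * s1 + (1 - th) * s2) <= Rpower (Gamma s1) th * Rpower (Gamma s2) (1 - th).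
Proof.
  intros Ht H1 H2. set (s := th * s1 + (1 - th) * s2).
  assert (Hs : 1 < s) by (unfold s; nra).
  set (G1 := Gamma s1). set (G2 := Gamma s2).
  assert (P1 : 0 < G1) by (apply Gamma_gt0; auto). assert (P2 : 0 < G2) by (apply Gamma_gt0; auto).
  set (K := Rpower G1 th * Rpower G2 (1 - th)).
  assert (HK : 0 < K) by (apply Rmult_lt_0_compat; apply Rpower_gt0).
  apply Gamma_le_of_trunc_le; auto. intros b Hb.
  assert (HR := is_RInt_scalR _ _ _ K _ (is_RInt_plusR _ _ _ _ _ _
    (is_RInt_scalR _ _ _ (th / G1) _ (is_RInt_Gamma_trunc s1 b H1))
    (is_RInt_scalR _ _ _ ((1 - th) / G2) _ (is_RInt_Gamma_trunc s2 b H2)))).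
  assert (Hle := is_RInt_le _ _ 0 b _ _ Hb (is_RInt_Gamma_trunc s b Hs) HR
    (fun t _ => gamma_integrand_interpolate th s1 s2 G1 G2 t Ht P1 P2)).
  assert (F1 := Gamma_trunc_le_Gamma s1 b H1 Hb). assert (F2 := Gamma_trunc_le_Gamma s2 b H2 Hb).
  fold G1 G2 in F1, F2.
  assert (Q : forall T G, 0 < G -> T <= G -> T / G <= 1).
  { intros T G HG HT. apply Rmult_le_reg_r with G; auto.
    unfold Rdiv. rewrite Rmult_assoc, Rinv_l, Rmult_1_r; lra. }
  assert (Q1 := Q _ _ P1 F1). assert (Q2 := Q _ _ P2 F2).
  replace (th / G1 * Gamma_trunc s1 b) with (th * (Gamma_trunc s1 b / G1)) in Hle by (field; lra).
  replace ((1 - th) / G2 * Gamma_trunc s2 b) with ((1 - th) * (Gamma_trunc s2 b / G2)) in Hle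
    by (field; lra).
  assert (th * (Gamma_trunc s1 b / G1) + (1 - th) * (Gamma_trunc s2 b / G2) <= 1) by nra.
  assert (K * (th * (Gamma_trunc s1 b / G1) + (1 - th) * (Gamma_trunc s2 b / G2)) <= K * 1)
    by (apply Rmult_le_compat_l; lra).
  lra.
Qed.

(* Wendel's inequalities, from log-convexity between x and x + 1. *)
Lemma Gamma_add_le x p : 1 < x -> 0 < p < 1 -> Gamma (x + p) <= Rpower x p * Gamma x.
Proof.
  intros Hx Hp. assert (H := Gamma_log_convex (1 - p) x (x + 1) ltac:(lra) Hx ltac:(lra)).
  replace ((1 - p) * x + (1 - (1 - p)) * (x + 1)) with (x + p) in H by ring.
  replace (1 - (1 - p)) with p in H by ring.
  assert (Pg := Gamma_gt0 x Hx).
  rewrite (Gamma_succ x), <- Rpower_mult_distr in H by lra.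
  replace (Rpower (Gamma x) (1 - p) * (Rpower x p * Rpower (Gamma x) p))
    with (Rpower x p * (Rpower (Gamma x) (1 - p) * Rpower (Gamma x) p)) in H by ring.
  rewrite <- Rpower_plus in H. replace (1 - p + p) with 1 in H by ring.
  rewrite Rpower_1 in H by lra. exact H.
Qed.

Lemma Gamma_succ_le x p : 1 < x -> 0 < p < 1 ->
  Gamma (x + 1) <= Rpower (x + p) (1 - p) * Gamma (x + p).
Proof.
  intros Hx Hp. assert (H := Gamma_log_convex p (x + p) (x + p + 1) ltac:(lra) ltac:(lra) ltac:(lra)).
  replace (p * (x + p) + (1 - p) * (x + p + 1)) with (x + 1) in H by ring.
  assert (Pg := Gamma_gt0 (x + p) ltac:(lra)).
  rewrite (Gamma_succ (x + p)), <- Rpower_mult_distr in H by lra.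
  replace (Rpower (Gamma (x + p)) p * (Rpower (x + p) (1 - p) * Rpower (Gamma (x + p)) (1 - p)))
    with (Rpower (x + p) (1 - p) * (Rpower (Gamma (x + p)) p * Rpower (Gamma (x + p)) (1 - p)))
    in H by ring.
  rewrite <- Rpower_plus in H. replace (p + (1 - p)) with 1 in H by ring.
  rewrite Rpower_1 in H by lra. exact H.
Qed.

Lemma Rpower_Gamma_ratio_bounds x p : 1 < x -> 0 < p < 1 ->
  x / (x + p) <= Rpower x p * Gamma (x + 1) / Gamma (x + p + 1) <= 1.
Proof.
  intros Hx Hp.
  assert (HA : 0 < Gamma x) by (apply Gamma_gt0; lra).
  assert (HB : 0 < Gamma (x + p)) by (apply Gamma_gt0; lra).
  assert (W1 := Gamma_add_le x p Hx Hp). assert (W2 := Gamma_succ_le x p Hx Hp).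
  rewrite Gamma_succ in W2 by lra. rewrite !Gamma_succ by lra.
  set (P := Rpower x p) in *. set (Q := Rpower (x + p) (1 - p)) in *.
  assert (HP : 0 < P) by apply Rpower_gt0.
  assert (PQ : P * Q <= x + p).
  { assert (P <= Rpower (x + p) p) by (apply Rle_Rpower_l; lra).
    assert (Rpower (x + p) p * Q = x + p).
    { unfold Q. rewrite <- Rpower_plus. replace (p + (1 - p)) with 1 by ring. apply Rpower_1; lra. }
    assert (0 < Q) by apply Rpower_gt0. nra. }
  assert (E : P * (x * Gamma x) / ((x + p) * Gamma (x + p)) * ((x + p) * Gamma (x + p))
              = P * (x * Gamma x)) by (field; split; lra).
  split; apply Rmult_le_reg_r with ((x + p) * Gamma (x + p)); [nra | | nra |]; rewrite E.
  - replace (x / (x + p) * ((x + p) * Gamma (x + p))) with (x * Gamma (x + p)) by (field; lra).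
    nra.
  - assert (P * (x * Gamma x) <= P * (Q * Gamma (x + p))) by (apply Rmult_le_compat_l; lra).
    assert (0 < Q) by apply Rpower_gt0. nra.
Qed.

(** * The Beta integrals *)

Lemma derivable_pt_lim_rpow_primitive a x : 0 < a ->
  derivable_pt_lim (fun t => / (a + 1) * rpow t (a + 1)) x (rpow x a).
Proof.
  intros Ha.
  replace (rpow x a) with (/ (a + 1) * ((a + 1) * rpow x (a + 1 - 1)))
    by (replace (a + 1 - 1) with a by ring; field; lra).
  apply derivable_pt_lim_scal, is_derive_Reals, is_derive_rpow. lra.
Qed.

Lemma RInt_rpow01 a : 0 < a -> RInt (fun g => rpow g a) 0 1 = / (a + 1).
Proof.
  intros Ha. apply is_RInt_uniqueR. eapply is_RInt_value.
  - apply (is_RInt_derivable_pt_lim (fun t => / (a + 1) * rpow t (a + 1))).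
    + intros x. apply derivable_pt_lim_rpow_primitive; auto.
    + apply continuity_rpow; auto.
  - rewrite rpow1, (rpow_nonpos 0) by lra. ring.
Qed.

Lemma RInt_rpow_mul_one_minus_pow_succ a n : 0 < a ->
  RInt (fun g => rpow g a * (1 - g) ^ S n) 0 1 =
  INR (S n) / (a + 1) * RInt (fun g => rpow g (a + 1) * (1 - g) ^ n) 0 1.
Proof.
  intros Ha. apply is_RInt_uniqueR.
  set (h := fun g => / (a + 1) * rpow g (a + 1) * (1 - g) ^ S n).
  set (dh := fun g => rpow g a * (1 - g) ^ S n
                      - INR (S n) / (a + 1) * (rpow g (a + 1) * (1 - g) ^ n)).
  assert (Hd : forall x, derivable_pt_lim h x (dh x)).
  { intros x. unfold h, dh.
    assert (D2 : derivable_pt_lim (fun t => (1 - t) ^ S n) x (- (INR (S n) * (1 - x) ^ n))).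
    { apply is_derive_Reals. auto_derive; auto. fold_INR_S n.
      replace (1 + - x) with (1 - x) by ring. ring. }
    assert (D := derivable_pt_lim_mult _ _ x _ _ (derivable_pt_lim_rpow_primitive a x Ha) D2).
    replace (rpow x a * (1 - x) ^ S n - INR (S n) / (a + 1) * (rpow x (a + 1) * (1 - x) ^ n))
      with (rpow x a * (1 - x) ^ S n + / (a + 1) * rpow x (a + 1) * - (INR (S n) * (1 - x) ^ n))
      by (field; lra).
    exact D. }
  assert (Hc : continuity dh).
  { unfold dh. apply continuity_minus; [| apply continuity_scal];
      apply continuity_mult; auto using continuity_one_minus_power; apply continuity_rpow; lra. }
  assert (H := is_RInt_plusR _ _ _ _ _ _ (is_RInt_derivable_pt_lim h dh 0 1 Hd Hc)
    (is_RInt_scalR _ _ _ (INR (S n) / (a + 1)) _ (is_RInt_RInt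
      (fun g => rpow g (a + 1) * (1 - g) ^ n) 0 1
      ltac:(apply continuity_mult; [apply continuity_rpow; lra | apply continuity_one_minus_power])))).
  eapply is_RInt_ext_all; [| eapply is_RInt_value; [exact H |]].
  - intros x. unfold dh. simpl. ring.
  - unfold h. rewrite (rpow_nonpos 0) by lra. simpl. ring.
Qed.

Lemma RInt_rpow_mul_one_minus_pow a n : 0 < a ->
  RInt (fun g => rpow g a * (1 - g) ^ n) 0 1 = INR (fact n) * Gamma (a + 1) / Gamma (a + INR n + 2).
Proof.
  revert a. induction n as [|n IH]; intros a Ha.
  - rewrite (RInt_ext01 _ (fun g => rpow g a)) by (intros; simpl; ring).
    rewrite RInt_rpow01 by auto.
    replace (a + INR 0 + 2) with ((a + 1) + 1) by (simpl; ring).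
    rewrite (Gamma_succ (a + 1)) by lra.
    assert (0 < Gamma (a + 1)) by (apply Gamma_gt0; lra). simpl. field; lra.
  - rewrite RInt_rpow_mul_one_minus_pow_succ, IH by lra.
    rewrite fact_simpl, mult_INR.
    replace (a + 1 + INR n + 2) with (a + INR (S n) + 2) by (rewrite S_INR; ring).
    rewrite (Gamma_succ (a + 1)) by lra.
    assert (0 < INR (S n)) by apply INR_S_gt0.
    assert (0 < Gamma (a + INR (S n) + 2)) by (apply Gamma_gt0; lra).
    assert (0 < Gamma (a + 1)) by (apply Gamma_gt0; lra).
    real_eq. field; lra.
Qed.

(** * The expectation and its asymptotics *)

Definition expected_cost (x p : R) : R :=
  Gamma (x + 1) / Gamma (x + p + 1) * ((x - 1) * Gamma (p + 1) + Gamma (x + p - 1) / Gamma (x - 1)).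

(* Lambda_m involves only the gap and span weights, both t^p: a Beta integral each. *)
Lemma Lambda_tour_weights p m : 0 < p < 1 -> (1 <= m)%nat ->
  Lambda m (tour_weights p) = expected_cost (INR (S (S m))) p.
Proof.
  intros Hp Hm. unfold Lambda, tour_weights, expected_cost; simpl w_gap; simpl w_min;
    simpl w_max; simpl w_span.
  rewrite !(RInt_ext01 (fun x => 0 * _) (fun _ => 0)) by (intros; ring).
  rewrite RInt_const, RInt_rpow_mul_one_minus_pow by lra.
  rewrite (@RInt_ext R_CompleteNormedModule (fun r => rpow r p * (r ^ m * (1 - r)))
    (fun r => rpow r (p + INR m) * (1 - r) ^ 1)).
  2:{ intros x Hx. rewrite Rmin_left, Rmax_right in Hx by lra.
      rewrite !rpow_Rpower by lra. rewrite Rpower_plus, Rpower_pow by lra. simpl. ring. }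
  assert (Hm0 : 0 <= INR m) by apply pos_INR.
  rewrite RInt_rpow_mul_one_minus_pow by lra.
  rewrite (Gamma_INR_fact (S (S m))) by lia.
  replace (INR (S (S m)) - 1) with (INR m + 1) by (rewrite !S_INR; ring).
  rewrite (Gamma_INR_fact m) by lia.
  replace (INR (S (S m)) + p + 1) with (p + INR (S m) + 2) by (rewrite !S_INR; ring).
  replace (INR (S (S m)) + p - 1) with (p + INR m + 1) by (rewrite !S_INR; ring).
  replace (p + INR m + INR 1 + 2) with (p + INR (S m) + 2) by (rewrite !S_INR; simpl; ring).
  assert (G1 : 0 < Gamma (p + INR (S m) + 2)) by (apply Gamma_gt0; rewrite S_INR; lra).
  assert (F0 : 0 < INR (fact m)) by apply INR_fact_lt_0.
  rewrite (fact_simpl (S m)), (fact_simpl m), !mult_INR. simpl (fact 1). rewrite !S_INR in *.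
  unfold scal, mult; simpl. unfold mult; simpl.
  field. lra.
Qed.

Lemma IterInt_E_N p N : 0 < p < 1 -> (3 <= N)%nat -> IterInt N (E_N N p) (expected_cost (INR N) p).
Proof.
  intros Hp HN. destruct N as [|[|[|m]]]; try lia.
  rewrite <- Lambda_tour_weights by (auto; lia). apply IterInt_E_N_Lambda; auto.
Qed.

Lemma ExpE_expected_cost p N : 0 < p < 1 -> (3 <= N)%nat -> ExpE N p = expected_cost (INR N) p.
Proof.
  intros Hp HN. assert (H := IterInt_E_N p N Hp HN). unfold ExpE.
  destruct (constructive_indefinite_description _ _) as [v [Hv | Hv]]; simpl.
  - apply (IterInt_unique N (E_N N p)); auto.
  - exfalso. apply Hv. eauto.
Qed.

Lemma expected_cost_decomposition x p : 2 < x -> 0 < p < 1 ->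
  Rpower x (p - 1) * expected_cost x p =
  Gamma (p + 1) * (Rpower x p * Gamma (x + 1) / Gamma (x + p + 1)) * ((x - 1) / x)
  + Rpower x (p - 1) * (x * (x - 1) / ((x + p) * (x + p - 1))).
Proof.
  intros Hx Hp. unfold expected_cost.
  assert (HA : 0 < Gamma (x - 1)) by (apply Gamma_gt0; lra).
  assert (HB : 0 < Gamma (x + p - 1)) by (apply Gamma_gt0; lra).
  assert (E1 : Gamma (x + 1) = x * ((x - 1) * Gamma (x - 1))).
  { rewrite Gamma_succ by lra. f_equal.
    replace x with ((x - 1) + 1) at 1 by ring. apply Gamma_succ; lra. }
  assert (E2 : Gamma (x + p + 1) = (x + p) * ((x + p - 1) * Gamma (x + p - 1))).
  { rewrite Gamma_succ by lra. f_equal.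
    replace (x + p) with ((x + p - 1) + 1) at 1 by ring. apply Gamma_succ; lra. }
  assert (EE : Rpower x (p - 1) = Rpower x p / x).
  { unfold Rminus. rewrite Rpower_plus, Rpower_Ropp, Rpower_1 by lra. field. lra. }
  rewrite E1, E2, EE. field. repeat split; lra.
Qed.

Lemma expected_cost_error x p : 2 < x -> 0 < p < 1 ->
  Rabs (Rpower x (p - 1) * expected_cost x p - Gamma (p + 1))
  <= 2 * Gamma (p + 1) / x + Rpower x (p - 1).
Proof.
  intros Hx Hp. rewrite expected_cost_decomposition by auto.
  assert (Hq := Rpower_Gamma_ratio_bounds x p ltac:(lra) Hp).
  set (q := Rpower x p * Gamma (x + 1) / Gamma (x + p + 1)) in *.
  set (Gp := Gamma (p + 1)). assert (HG : 0 < Gp) by (apply Gamma_gt0; lra).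
  set (r := Rpower x (p - 1)). assert (Hr : 0 < r) by apply Rpower_gt0.
  set (s2 := x * (x - 1) / ((x + p) * (x + p - 1))).
  assert (Hs2 : 0 <= s2 <= 1).
  { unfold s2. split; [apply Rdiv_le_0_compat; nra |].
    apply Rmult_le_reg_r with ((x + p) * (x + p - 1)); [nra |].
    unfold Rdiv. rewrite Rmult_assoc, Rinv_l, Rmult_1_r by nra. nra. }
  assert (Hd : Rabs (q * ((x - 1) / x) - 1) <= 2 / x).
  { assert (p / (x + p) <= 1 / x).
    { apply Rmult_le_reg_r with (x * (x + p)); [nra |].
      replace (p / (x + p) * (x * (x + p))) with (p * x) by (field; lra).
      replace (1 / x * (x * (x + p))) with (x + p) by (field; lra). nra. }
    assert (x / (x + p) = 1 - p / (x + p)) by (field; lra).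
    assert (0 < x / (x + p)) by (apply Rdiv_lt_0_compat; lra).
    assert (0 <= q / x <= 1 / x).
    { split; [apply Rdiv_le_0_compat; lra |].
      unfold Rdiv. apply Rmult_le_compat_r; [left; apply Rinv_0_lt_compat |]; lra. }
    replace (q * ((x - 1) / x) - 1) with ((q - 1) - q / x) by (field; lra).
    apply Rabs_le. unfold Rdiv in *. lra. }
  replace (Gp * q * ((x - 1) / x) + r * s2 - Gp) with (Gp * (q * ((x - 1) / x) - 1) + r * s2)
    by ring.
  eapply Rle_trans; [apply Rabs_triang |].
  rewrite Rabs_mult, (Rabs_right Gp), (Rabs_right (r * s2)) by nra.
  assert (Gp * Rabs (q * ((x - 1) / x) - 1) <= Gp * (2 / x)) by (apply Rmult_le_compat_l; lra).
  assert (r * s2 <= r) by nra.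
  unfold Rdiv in *. lra.
Qed.

Lemma Rpower_expected_cost_cv p : 0 < p < 1 ->
  Un_cv (fun N => Rpower (INR N) (p - 1) * ExpE N p) (Gamma (p + 1)).
Proof.
  intros Hp eps He. set (Gp := Gamma (p + 1)). assert (HG : 0 < Gp) by (apply Gamma_gt0; lra).
  (* beyond M the term x^(p-1) is below eps/4, beyond 4 Gp/eps the term 2 Gp/x is below eps/2 *)
  set (M := Rpower (eps / 4) (/ (p - 1))).
  assert (HMe : Rpower M (p - 1) = eps / 4).
  { unfold M. rewrite Rpower_mult, Rinv_l, Rpower_1; lra. }
  assert (HM : 0 < M) by apply Rpower_gt0.
  destruct (INR_archimed 1 (Rmax 3 (Rmax M (4 * Gp / eps))) ltac:(lra)) as [n0 Hn0].
  rewrite Rmult_1_r in Hn0.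
  assert (A1 := Rmax_l 3 (Rmax M (4 * Gp / eps))). assert (A2 := Rmax_r 3 (Rmax M (4 * Gp / eps))).
  assert (A3 := Rmax_l M (4 * Gp / eps)). assert (A4 := Rmax_r M (4 * Gp / eps)).
  exists n0. intros n Hn. unfold R_dist.
  assert (Hx : INR n0 <= INR n) by (apply le_INR; lia).
  assert (H3 : (3 <= n)%nat) by (apply INR_le; simpl; lra).
  rewrite ExpE_expected_cost by auto. set (x := INR n) in *.
  eapply Rle_lt_trans; [apply expected_cost_error; auto; lra |]. fold Gp.
  assert (Rpower x (p - 1) <= eps / 4) by (rewrite <- HMe; apply Rpower_le_neg_exponent; lra).
  assert (2 * Gp / x < eps / 2).
  { assert (4 * Gp / eps < x) by lra.
    apply Rmult_lt_reg_r with (x * eps); [nra |].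
    replace (2 * Gp / x * (x * eps)) with (2 * Gp * eps) by (field; lra).
    replace (4 * Gp / eps) with (4 * Gp * / eps) in * by (unfold Rdiv; ring).
    assert (4 * Gp * / eps * eps < x * eps) by (apply Rmult_lt_compat_r; lra).
    rewrite Rmult_assoc, Rinv_l, Rmult_1_r in H1 by lra. nra. }
  lra.
Qed.

Theorem mainTheorem12 (p : R) (hp0 : 0 < p) (hp1 : p < 1) :
  (forall N : nat, (3 <= N)%nat ->
     IterInt N (E_N N p)
       (Gamma (INR N + 1) / Gamma (INR N + p + 1) *
        ((INR N - 1) * Gamma (p + 1) + Gamma (INR N + p - 1) / Gamma (INR N - 1)))) /\
  Un_cv (fun N => Rpower (INR N) (p - 1) * ExpE N p) (Gamma (p + 1)).
Proof.
  split.
  - intros N HN. exact (IterInt_E_N p N (conj hp0 hp1) HN).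
  - exact (Rpower_expected_cost_cv p (conj hp0 hp1)).
Qed.
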